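(* Let $\Omega\subset\mathbb{R}^2$ be an open convex polygon with corners $\mathbf P_1,\dots,\mathbf P_{\mathcal N_\Gamma}$, side lengths $L_1,\dots,L_{\mathcal N_\Gamma}$, and exterior angle $\Omega_j\in(\pi,2\pi)$ at $\mathbf P_j$; let $\omega\subset\mathbb{R}^2\setminus\overline\Omega$ be a bounded open set consisting of finitely many pairwise disjoint components with Lipschitz piecewise-$C^1$ boundaries, $\gamma=\partial\omega$, $\mathrm{dist}(\Omega,\omega)>0$, and $D=\mathbb{R}^2\setminus(\overline\Omega\cup\overline\omega)$. Let $k>0$, $c_*>0$ with $kL_j\ge c_*$ for all $j$, $u^i(\mathbf x)=e^{\mathrm ik\mathbf x\cdot\mathbf d}$ for a unit vector $\mathbf d$, and let $u\in C^2(D)\cap C(\overline D)$ satisfy $\Delta u+k^2u=0$ in $D$, $u=0$ on $\partial D$, with $u-u^i$ satisfying the Sommerfeld radiation condition. Let $u_{\max}(k)=\|u\|_{L^\infty(D)}$. Suppose $\mathbf x\in D$ satisfies $r:=|\mathbf x-\mathbf P_j|\in(0,1/k]$ and $r<\mathrm{dist}(\mathbf P_j,\gamma)$. Then there exists a constant $C>0$, depending only on $\partial D$ and $c_*$, such that $$|u(\mathbf x)|\le C(kr)^{\pi/\Omega_j}u_{\max}(k).$$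
   Context: The Sommerfeld radiation condition for $u^s=u-u^i$ is $\partial u^s/\partial r-\mathrm iku^s=o(r^{-1/2})$ as $r=|\mathbf x|\to\infty$. *)

From Stdlib Require Import Reals Lra.
From Coquelicot Require Import Coquelicot.
Open Scope R_scope.

Definition pt := (R * R)%type.
Definition pset := pt -> Prop.

Definition dist2 (p q : pt) : R :=
  sqrt ((fst p - fst q) ^ 2 + (snd p - snd q) ^ 2).
Definition norm2 (p : pt) : R := sqrt (fst p ^ 2 + snd p ^ 2).
Definition dot2 (a b : pt) : R := fst a * fst b + snd a * snd b.
Definition vsub (a b : pt) : pt := (fst a - fst b, snd a - snd b).
Definition cross2 (a b : pt) : R := fst a * snd b - snd a * fst b.

Definition open_set (S : pset) : Prop :=
  forall p, S p -> exists e, 0 < e /\ forall q, dist2 p q < e -> S q.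
Definition closure (S : pset) : pset :=
  fun p => forall e, 0 < e -> exists q, S q /\ dist2 p q < e.
Definition compl (S : pset) : pset := fun p => ~ S p.
Definition boundary (S : pset) : pset :=
  fun p => closure S p /\ closure (compl S) p.
Definition bounded_set (S : pset) : Prop :=
  exists M, forall p, S p -> norm2 p <= M.
Definition connected_open (S : pset) : Prop :=
  forall A B : pset, open_set A -> open_set B ->
    (forall p, S p <-> (A p \/ B p)) -> (forall p, ~ (A p /\ B p)) ->
    (forall p, ~ A p) \/ (forall p, ~ B p).
Definition dist_sets_pos (A B : pset) : Prop :=
  exists delta, 0 < delta /\ forall a b, A a -> B b -> delta <= dist2 a b.
Definition lt_dist_pt_set (r : R) (p : pt) (A : pset) : Prop :=
  exists delta, r < delta /\ forall a, A a -> delta <= dist2 p a.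

(* ---- Lipschitz boundary: locally the (rotated) epigraph of a Lipschitz graph ---- *)
Definition lipschitz_fun (g : R -> R) : Prop :=
  exists Lg, forall a b, Rabs (g a - g b) <= Lg * Rabs (a - b).
Definition lipschitz_boundary (S : pset) : Prop :=
  forall p, boundary S p ->
    exists (theta rho h : R) (g : R -> R),
      0 < rho /\ 0 < h /\ lipschitz_fun g /\ g 0 = 0 /\
      (forall s, Rabs s < rho -> Rabs (g s) < h) /\
      forall q : pt,
        let s := cos theta * (fst q - fst p) + sin theta * (snd q - snd p) in
        let t := - sin theta * (fst q - fst p) + cos theta * (snd q - snd p) in
        Rabs s < rho -> Rabs t < h -> (S q <-> g s < t).

Definition C1_on_01 (f : R -> R) : Prop :=
  forall t, 0 <= t <= 1 -> ex_derive f t /\ continuity_pt (Derive f) t.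
Definition C1_curve (c : R -> pt) : Prop :=
  C1_on_01 (fun t => fst (c t)) /\ C1_on_01 (fun t => snd (c t)).
Definition piecewise_C1_boundary (S : pset) : Prop :=
  exists (n : nat) (c : nat -> R -> pt),
    (forall i, (i < n)%nat -> C1_curve (c i)) /\
    forall p, boundary S p <->
      exists i t, (i < n)%nat /\ 0 <= t <= 1 /\ c i t = p.

Definition admissible_obstacle (omega : pset) : Prop :=
  open_set omega /\ bounded_set omega /\
  exists (m : nat) (W : nat -> pset),
    (0 < m)%nat /\
    (forall i, (i < m)%nat ->
        open_set (W i) /\ connected_open (W i) /\ (exists p, W i p) /\
        lipschitz_boundary (W i) /\ piecewise_C1_boundary (W i)) /\
    (forall i j p, (i < m)%nat -> (j < m)%nat -> i <> j -> ~ (W i p /\ W j p)) /\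
    (forall p, omega p <-> exists i, (i < m)%nat /\ W i p).

(* ---- convex polygon with vertices P 0, ..., P (N-1) listed counterclockwise ---- *)
Definition vtx (N : nat) (P : nat -> pt) (j : nat) : pt := P (j mod N)%nat.
Definition convex_polygon (N : nat) (P : nat -> pt) : Prop :=
  (3 <= N)%nat /\
  forall j k, (j < N)%nat -> (k < N)%nat -> k <> j -> k <> ((j + 1) mod N)%nat ->
    0 < cross2 (vsub (vtx N P (j + 1)) (vtx N P j)) (vsub (P k) (vtx N P j)).
Definition polygon_interior (N : nat) (P : nat -> pt) : pset :=
  fun x => forall j, (j < N)%nat ->
    0 < cross2 (vsub (vtx N P (j + 1)) (vtx N P j)) (vsub x (vtx N P j)).
Definition side_length (N : nat) (P : nat -> pt) (j : nat) : R :=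
  dist2 (vtx N P (j + 1)) (vtx N P j).
Definition exterior_angle (N : nat) (P : nat -> pt) (j : nat) : R :=
  let a := vsub (vtx N P (j + N - 1)) (vtx N P j) in
  let b := vsub (vtx N P (j + 1)) (vtx N P j) in
  2 * PI - acos (dot2 a b / (norm2 a * norm2 b)).

Definition exterior_domain (Omega omega : pset) : pset :=
  fun x => ~ closure Omega x /\ ~ closure omega x.

Definition dx (f : pt -> R) : pt -> R :=
  fun p => Derive (fun t => f (t, snd p)) (fst p).
Definition dy (f : pt -> R) : pt -> R :=
  fun p => Derive (fun t => f (fst p, t)) (snd p).
Definition ex_dx (f : pt -> R) (p : pt) : Prop := ex_derive (fun t => f (t, snd p)) (fst p).
Definition ex_dy (f : pt -> R) (p : pt) : Prop := ex_derive (fun t => f (fst p, t)) (snd p).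
Definition cont_at (f : pt -> R) (p : pt) : Prop :=
  forall e, 0 < e -> exists d, 0 < d /\ forall q, dist2 p q < d -> Rabs (f q - f p) < e.
Definition C2_on (S : pset) (f : pt -> R) : Prop :=
  forall p, S p ->
    ex_dx f p /\ ex_dy f p /\
    ex_dx (dx f) p /\ ex_dy (dx f) p /\ ex_dx (dy f) p /\ ex_dy (dy f) p /\
    cont_at f p /\ cont_at (dx f) p /\ cont_at (dy f) p /\
    cont_at (dx (dx f)) p /\ cont_at (dy (dx f)) p /\
    cont_at (dx (dy f)) p /\ cont_at (dy (dy f)) p.
Definition laplacian (f : pt -> R) : pt -> R := fun p => dx (dx f) p + dy (dy f) p.

Definition Re_f (u : pt -> C) : pt -> R := fun p => fst (u p).
Definition Im_f (u : pt -> C) : pt -> R := fun p => snd (u p).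

Definition C2_on_C (S : pset) (u : pt -> C) : Prop := C2_on S (Re_f u) /\ C2_on S (Im_f u).
Definition continuous_on_C (A : pset) (u : pt -> C) : Prop :=
  forall p, A p -> forall e, 0 < e -> exists d, 0 < d /\
    forall q, A q -> dist2 p q < d -> Cmod (Cminus (u q) (u p)) < e.
Definition helmholtz_at (k : R) (u : pt -> C) (p : pt) : Prop :=
  laplacian (Re_f u) p + k ^ 2 * Re_f u p = 0 /\
  laplacian (Im_f u) p + k ^ 2 * Im_f u p = 0.

Definition plane_wave (k : R) (d : pt) : pt -> C :=
  fun x => (cos (k * dot2 x d), sin (k * dot2 x d)).

Definition radial_deriv (f : pt -> R) (x : pt) : R :=
  Derive (fun t => f (t * fst x / norm2 x, t * snd x / norm2 x)) (norm2 x).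
Definition radial_deriv_C (u : pt -> C) (x : pt) : C :=
  (radial_deriv (Re_f u) x, radial_deriv (Im_f u) x).

Definition sommerfeld (k : R) (us : pt -> C) : Prop :=
  forall e, 0 < e -> exists R0, forall x, R0 < norm2 x ->
    sqrt (norm2 x) * Cmod (Cminus (radial_deriv_C us x) (Cmult (Cmult Ci (RtoC k)) (us x))) < e.

Definition sup_norm_on (D : pset) (u : pt -> C) : Rbar :=
  Lub_Rbar (fun v => exists y, D y /\ v = Cmod (u y)).

(** Near the corner P_j the exterior domain D coincides, within a radius rho_geo independent of
    k, with the sector {0 < |x - P_j|, |theta| < Omega_j/2} (angles measured from the exterior
    bisector), and u vanishes on its two straight sides.  With alpha = pi/Omega_j and
    z = ((x - P_j)/rho)^alpha, W = Re (2 z - z^2) is harmonic, nonnegative on the closed sector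
    and at least 1 on the arc |x - P_j| = rho; for k rho <= 1, Phi = 2 M W (1 - k^2 |x - P_j|^2/2)
    is a supersolution of Delta + k^2 dominating +-Re u and +-Im u on the boundary of the
    truncated sector.  A maximum principle, proved by minimising (Phi - f)/(1 - k^2 |x - P_j|^2/2)
    over the closed polar rectangle, gives |u(x)| <= 12 u_max (r/rho)^alpha.  Choosing
    rho = min (1/k, rho_geo) and using k L_j >= c_* to bound 1/(k rho) turns (r/rho)^alpha into
    (k r)^alpha. *)

From Pilot Require Import Defs.
From Stdlib Require Import Reals Rgeom Lra Lia Nsatz Classical ClassicalEpsilon.
From Coquelicot Require Import Coquelicot.
Open Scope R_scope.

(** * Continuous functions on a rectangle *)

Definition clamp (a b x : R) : R := Rmax a (Rmin b x).

Lemma clamp_bounds a b x : a <= b -> a <= clamp a b x <= b.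
Proof. intros; unfold clamp, Rmax, Rmin; repeat destruct Rle_dec; lra. Qed.

Lemma clamp_id a b x : a <= x <= b -> clamp a b x = x.
Proof. intros; unfold clamp, Rmax, Rmin; repeat destruct Rle_dec; lra. Qed.

Lemma clamp_lipschitz a b x y : a <= b -> Rabs (clamp a b x - clamp a b y) <= Rabs (x - y).
Proof.
  intros; unfold clamp, Rmax, Rmin; repeat destruct Rle_dec; unfold Rabs;
    repeat destruct Rcase_abs; lra.
Qed.

Lemma continuity_pt_of_eps (f : R -> R) x :
  (forall e, 0 < e -> exists d, 0 < d /\ forall y, Rabs (y - x) < d -> Rabs (f y - f x) < e) ->
  continuity_pt f x.
Proof.
  intros H e He. destruct (H e He) as [d [Hd Hy]]. exists d; split; auto.
  intros y [_ Hy']. apply Hy. exact Hy'.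
Qed.

Lemma continuity_pt_eps (f : R -> R) x : continuity_pt f x ->
  forall e, 0 < e -> exists d, 0 < d /\ forall y, Rabs (y - x) < d -> Rabs (f y - f x) < e.
Proof.
  intros H e He. destruct (H e He) as [d [Hd Hy]]. exists d; split; auto.
  intros y Hyx. destruct (Req_dec y x) as [->|Hne].
  - rewrite Rminus_eq_0, Rabs_R0; auto.
  - apply (Hy y). split; [split; [exact I| intro; apply Hne; auto]|exact Hyx].
Qed.

Lemma Rmult_continuous_eps F G e : 0 < e -> exists h, 0 < h /\
  forall F' G', Rabs (F' - F) < h -> Rabs (G' - G) < h -> Rabs (F' * G' - F * G) < e.
Proof.
  intros He. set (K := Rabs F + Rabs G + 1).
  assert (HK : 0 < K) by (unfold K; pose proof (Rabs_pos F); pose proof (Rabs_pos G); lra).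
  exists (Rmin 1 (e / (2 * K))). split. { apply Rmin_pos; [lra|]. apply Rdiv_lt_0_compat; lra. }
  intros F' G' H1 H2. pose proof (Rmin_l 1 (e / (2 * K))). pose proof (Rmin_r 1 (e / (2 * K))).
  set (h := Rmin 1 (e / (2 * K))) in *.
  replace (F' * G' - F * G) with ((F' - F) * G' + F * (G' - G)) by ring.
  eapply Rle_lt_trans; [apply Rabs_triang|]. rewrite !Rabs_mult.
  assert (Rabs G' <= Rabs G + 1).
  { replace G' with (G + (G' - G)) by ring. eapply Rle_trans; [apply Rabs_triang|]. lra. }
  pose proof (Rabs_pos (F' - F)). pose proof (Rabs_pos G'). pose proof (Rabs_pos F).
  pose proof (Rabs_pos (G' - G)).
  assert (Rabs (F' - F) * Rabs G' <= h * (Rabs G + 1)) by (apply Rmult_le_compat; lra).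
  assert (Rabs F * Rabs (G' - G) <= Rabs F * h) by (apply Rmult_le_compat_l; lra).
  assert (h * K <= e / 2).
  { apply Rle_trans with (e / (2 * K) * K). apply Rmult_le_compat_r; lra. right; field; lra. }
  unfold K in *. nra.
Qed.

Section Rectangle.

Variables a b c d : R.

Definition in_rect (s p : R) := a <= s <= b /\ c <= p <= d.

Definition cont_on_rect (G : R -> R -> R) :=
  forall s p, in_rect s p -> forall e, 0 < e -> exists dl, 0 < dl /\
    forall s' p', in_rect s' p' -> Rabs (s' - s) < dl -> Rabs (p' - p) < dl ->
      Rabs (G s' p' - G s p) < e.

Lemma cont_on_rect_unif G : cont_on_rect G ->
  forall e, 0 < e -> exists d0, 0 < d0 /\ forall s p s' p', in_rect s p -> in_rect s' p' ->
    Rabs (s - s') < d0 -> Rabs (p - p') < d0 -> Rabs (G s p - G s' p') < e.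
Proof.
  intros HG e He.
  assert (H : forall uv : R * R, exists dl : posreal, let (u, v) := uv in
     in_rect u v -> forall s' p', in_rect s' p' ->
     Rabs (s' - u) < dl -> Rabs (p' - v) < dl -> Rabs (G s' p' - G u v) < e / 2).
  { intros [u v]. destruct (classic (in_rect u v)) as [Hr|Hr].
    - destruct (HG u v Hr (e/2)) as [dl [Hdl Hd]]; [lra|].
      exists (mkposreal dl Hdl). intros _; exact Hd.
    - exists (mkposreal 1 Rlt_0_1). intros; contradiction. }
  destruct (choice _ H) as [dlf' Hdl'].
  set (dlf := fun u v => dlf' (u, v)).
  assert (Hdl : forall u v, in_rect u v -> forall s' p', in_rect s' p' ->
     Rabs (s' - u) < dlf u v -> Rabs (p' - v) < dlf u v -> Rabs (G s' p' - G u v) < e / 2)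
    by (intros u v; exact (Hdl' (u, v))).
  assert (Hpos : forall u v, 0 < dlf u v / 2) by (intros u v; pose proof (cond_pos (dlf u v)); lra).
  (* a Lebesgue number of the cover by the half-size balls *)
  destruct (compactness_value_2d a b c d (fun u v => mkposreal _ (Hpos u v))) as [d0 Hd0].
  exists d0. split; [apply cond_pos|].
  intros s p s' p' Hr Hr' H1 H2.
  apply NNPP. intro Hn. apply (Hd0 s p (proj1 Hr) (proj2 Hr)).
  intros [u [v [Hu [Hv [Hsu [Hpv Hle]]]]]]. apply Hn. simpl in *.
  assert (Hruv : in_rect u v) by (split; auto).
  assert (A1 := Hdl u v Hruv s p Hr). assert (A2 := Hdl u v Hruv s' p' Hr').
  assert (Hs' : Rabs (s' - u) < dlf u v).
  { replace (s' - u) with ((s' - s) + (s - u)) by ring.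
    eapply Rle_lt_trans; [apply Rabs_triang|]. rewrite Rabs_minus_sym in H1. lra. }
  assert (Hp' : Rabs (p' - v) < dlf u v).
  { replace (p' - v) with ((p' - p) + (p - v)) by ring.
    eapply Rle_lt_trans; [apply Rabs_triang|]. rewrite Rabs_minus_sym in H2. lra. }
  pose proof (Hpos u v).
  specialize (A1 ltac:(lra) ltac:(lra)). specialize (A2 Hs' Hp').
  replace (G s p - G s' p') with ((G s p - G u v) - (G s' p' - G u v)) by ring.
  eapply Rle_lt_trans; [apply Rabs_triang|]. rewrite Rabs_Ropp. lra.
Qed.

Lemma cont_on_rect_min G : a <= b -> c <= d -> cont_on_rect G ->
  exists s0 p0, in_rect s0 p0 /\ forall s p, in_rect s p -> G s0 p0 <= G s p.
Proof.
  intros Hab Hcd HG. pose proof (cont_on_rect_unif _ HG) as HU.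
  assert (Hcol : forall s, exists pm, a <= s <= b ->
    c <= pm <= d /\ forall p, c <= p <= d -> G s pm <= G s p).
  { intros s. destruct (classic (a <= s <= b)) as [Hs|Hs]; [|exists c; tauto].
    destruct (continuity_ab_min (fun p => G s (clamp c d p)) c d Hcd) as [pm [Hm Hpm]].
    - intros p _. apply continuity_pt_of_eps. intros e He. destruct (HU e He) as [d0 [Hd0 Hu]].
      exists d0; split; auto. intros y Hy. apply Hu.
      + split; auto. apply clamp_bounds; auto.
      + split; auto. apply clamp_bounds; auto.
      + rewrite Rminus_eq_0, Rabs_R0; auto.
      + eapply Rle_lt_trans; [apply clamp_lipschitz; auto| exact Hy].
    - exists pm. intros _. split; auto. intros p Hp. specialize (Hm p Hp).
      rewrite !clamp_id in Hm; auto. }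
  destruct (choice _ Hcol) as [pm Hpm].
  destruct (continuity_ab_min (fun s => G (clamp a b s) (pm (clamp a b s))) a b Hab)
    as [sm [Hm Hsm]].
  - intros s _. apply continuity_pt_of_eps. intros e He. destruct (HU e He) as [d0 [Hd0 Hu]].
    exists d0; split; auto. intros y Hy.
    set (y' := clamp a b y). set (s' := clamp a b s).
    assert (Hy' : a <= y' <= b) by (apply clamp_bounds; auto).
    assert (Hs' : a <= s' <= b) by (apply clamp_bounds; auto).
    assert (Hys : Rabs (y' - s') < d0)
      by (eapply Rle_lt_trans; [apply clamp_lipschitz; auto| exact Hy]).
    destruct (Hpm y' Hy') as [Py1 Py2]. destruct (Hpm s' Hs') as [Ps1 Ps2].
    assert (E1 : Rabs (G y' (pm s') - G s' (pm s')) < e).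
    { apply Hu; try (split; auto); auto. rewrite Rminus_eq_0, Rabs_R0; auto. }
    assert (E2 : Rabs (G y' (pm y') - G s' (pm y')) < e).
    { apply Hu; try (split; auto); auto. rewrite Rminus_eq_0, Rabs_R0; auto. }
    specialize (Py2 _ Ps1). specialize (Ps2 _ Py1).
    revert E1 E2; unfold Rabs; repeat destruct Rcase_abs; intros; lra.
  - exists sm, (pm sm). rewrite clamp_id in Hm; auto.
    destruct (Hpm sm Hsm) as [Hp1 Hp2]. split; [split; auto|].
    intros s p [Hs Hp]. specialize (Hm s Hs). rewrite clamp_id in Hm; auto.
    specialize (Hpm s Hs) as [_ Hq]. specialize (Hq p Hp). lra.
Qed.

Lemma cont_on_rect_ext F G : (forall s p, F s p = G s p) -> cont_on_rect F -> cont_on_rect G.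
Proof.
  intros E H s p Hr e He. destruct (H s p Hr e He) as [d1 [Hd1 H1]]. exists d1; split; auto.
  intros. rewrite <- !E. auto.
Qed.

Lemma cont_on_rect_plus F G : cont_on_rect F -> cont_on_rect G ->
  cont_on_rect (fun s p => F s p + G s p).
Proof.
  intros HF HG s p Hr e He. destruct (HF s p Hr (e/2) ltac:(lra)) as [d1 [Hd1 H1]].
  destruct (HG s p Hr (e/2) ltac:(lra)) as [d2 [Hd2 H2]].
  exists (Rmin d1 d2). split; [apply Rmin_pos; auto|]. intros s' p' Hr' Hs Hp.
  pose proof (Rmin_l d1 d2); pose proof (Rmin_r d1 d2).
  specialize (H1 s' p' Hr' ltac:(lra) ltac:(lra)). specialize (H2 s' p' Hr' ltac:(lra) ltac:(lra)).
  replace (F s' p' + G s' p' - (F s p + G s p)) with ((F s' p' - F s p) + (G s' p' - G s p))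
    by ring.
  eapply Rle_lt_trans; [apply Rabs_triang|]. lra.
Qed.

Lemma cont_on_rect_mult F G : cont_on_rect F -> cont_on_rect G ->
  cont_on_rect (fun s p => F s p * G s p).
Proof.
  intros HF HG s p Hr e He. destruct (Rmult_continuous_eps (F s p) (G s p) e He) as [h [Hh Hc]].
  destruct (HF s p Hr h Hh) as [d1 [Hd1 H1]]. destruct (HG s p Hr h Hh) as [d2 [Hd2 H2]].
  exists (Rmin d1 d2). split; [apply Rmin_pos; auto|]. intros s' p' Hr' Hs Hp.
  pose proof (Rmin_l d1 d2); pose proof (Rmin_r d1 d2).
  apply Hc; [apply H1|apply H2]; auto; lra.
Qed.

Lemma cont_on_rect_fst (g : R -> R) : (forall s, a <= s <= b -> continuity_pt g s) ->
  cont_on_rect (fun s _ => g s).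
Proof.
  intros Hg s p Hr e He. destruct (continuity_pt_eps g s (Hg s (proj1 Hr)) e He) as [d1 [Hd1 H1]].
  exists d1; split; auto.
Qed.

Lemma cont_on_rect_snd (g : R -> R) : (forall p, c <= p <= d -> continuity_pt g p) ->
  cont_on_rect (fun _ p => g p).
Proof.
  intros Hg s p Hr e He. destruct (continuity_pt_eps g p (Hg p (proj2 Hr)) e He) as [d1 [Hd1 H1]].
  exists d1; split; auto.
Qed.

End Rectangle.

(** * Second derivative at a minimum *)

Lemma Derive_eq0_at_local_min (g : R -> R) t0 dl : 0 < dl ->
  (forall t, Rabs (t - t0) < dl -> g t0 <= g t) -> ex_derive g t0 -> Derive g t0 = 0.
Proof.
  intros Hd Hm [l Hl]. rewrite (is_derive_unique _ _ _ Hl).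
  apply is_derive_Reals in Hl.
  set (pr := exist (fun l => derivable_pt_abs g t0 l) l Hl : derivable_pt g t0).
  change l with (derive_pt g t0 pr).
  apply (deriv_minimum g (t0 - dl) (t0 + dl)); try lra.
  intros x H1 H2. apply Hm. unfold Rabs; destruct Rcase_abs; lra.
Qed.

Lemma decreasing_of_neg_derive (g g' : R -> R) a b : a < b ->
  (forall x, a <= x <= b -> is_derive g x (g' x)) ->
  g' a <= 0 -> (forall x, a < x <= b -> g' x < 0) -> g b < g a.
Proof.
  intros Hab Hder Ha Hneg. set (m := (a + b) / 2).
  assert (Hcont : forall x, a <= x <= b -> continuity_pt g x).
  { intros x Hx. pose proof (Hder x Hx) as Hd. apply is_derive_Reals in Hd.
    apply (derivable_continuous_pt g x (exist _ _ Hd)). }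
  (* two halves, since the mean value point may be [a] itself, where only [g' a <= 0] *)
  destruct (MVT_gen g m b g') as [c1 [Hc1 E1]].
  { intros x Hx. apply Hder. unfold Rmin, Rmax in Hx; destruct Rle_dec; unfold m in *; lra. }
  { intros x Hx. apply Hcont. unfold Rmin, Rmax in Hx; destruct Rle_dec; unfold m in *; lra. }
  destruct (MVT_gen g a m g') as [c2 [Hc2 E2]].
  { intros x Hx. apply Hder. unfold Rmin, Rmax in Hx; destruct Rle_dec; unfold m in *; lra. }
  { intros x Hx. apply Hcont. unfold Rmin, Rmax in Hx; destruct Rle_dec; unfold m in *; lra. }
  rewrite Rmin_left in Hc1, Hc2 by (unfold m; lra).
  rewrite Rmax_right in Hc1, Hc2 by (unfold m; lra).
  assert (g' c1 < 0) by (apply Hneg; unfold m in *; lra).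
  assert (g' c2 <= 0)
    by (destruct (Req_dec c2 a) as [->|]; [lra|left; apply Hneg; unfold m in *; lra]).
  assert (g b - g m < 0) by (rewrite E1; apply Rmult_neg_pos; unfold m; lra).
  assert (g m - g a <= 0) by (rewrite E2; apply Rmult_le_0_r; unfold m; lra).
  lra.
Qed.

Lemma Derive2_nonneg_at_local_min (g : R -> R) t0 dl : 0 < dl ->
  (forall t, Rabs (t - t0) < dl -> g t0 <= g t) ->
  (forall t, Rabs (t - t0) < dl -> ex_derive g t) ->
  ex_derive (Derive g) t0 -> 0 <= Derive (Derive g) t0.
Proof.
  intros Hd Hm Hex [D2 HD2]. rewrite (is_derive_unique _ _ _ HD2).
  destruct (Rle_or_lt 0 D2) as [|Hneg]; auto. exfalso.
  assert (Hg0 : Derive g t0 = 0).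
  { apply (Derive_eq0_at_local_min g t0 dl); auto. apply Hex. rewrite Rminus_eq_0, Rabs_R0; auto. }
  apply is_derive_Reals in HD2.
  destruct (HD2 (- D2 / 2) ltac:(lra)) as [eta Heta].
  assert (Hright : forall h, 0 < h < eta -> Derive g (t0 + h) < 0).
  { intros h Hh. assert (h <> 0) by lra.
    specialize (Heta h ltac:(lra) ltac:(rewrite Rabs_pos_eq; lra)). rewrite Hg0 in Heta.
    apply Rabs_def2 in Heta.
    replace (Derive g (t0 + h)) with ((Derive g (t0 + h) - 0) / h * h) by (field; lra).
    apply Rmult_neg_pos; lra. }
  pose proof (cond_pos eta).
  set (h := Rmin eta dl / 2).
  assert (Hh : 0 < h < eta /\ h < dl) by (unfold h, Rmin; destruct Rle_dec; lra).
  assert (g (t0 + h) < g t0).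
  { apply (decreasing_of_neg_derive g (Derive g)); [lra| | lra |].
    - intros x Hx. apply Derive_correct, Hex. rewrite Rabs_pos_eq; lra.
    - intros x Hx. replace x with (t0 + (x - t0)) by ring. apply Hright. lra. }
  assert (g t0 <= g (t0 + h)) by (apply Hm; rewrite Rabs_pos_eq; lra).
  lra.
Qed.

Lemma dist2_horizontal x y t : dist2 (x, y) (t, y) = Rabs (x - t).
Proof.
  unfold dist2; simpl. rewrite Rminus_eq_0, <- sqrt_Rsqr_abs. f_equal. unfold Rsqr. ring.
Qed.

Lemma dist2_swap a b : dist2 (snd a, fst a) (snd b, fst b) = dist2 a b.
Proof. unfold dist2; simpl. f_equal. ring. Qed.

Lemma dxx_nonneg_at_local_min (g gx : pt -> R) (gxx : R) q0 dl : 0 < dl ->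
  (forall q, dist2 q0 q < dl ->
     g q0 <= g q /\ is_derive (fun t => g (t, snd q)) (fst q) (gx q)) ->
  is_derive (fun t => gx (t, snd q0)) (fst q0) gxx -> 0 <= gxx.
Proof.
  intros Hdl Hq Hxx. destruct q0 as [x0 y0]. simpl in Hxx.
  set (h := fun t => g (t, y0)).
  assert (Hnear : forall t, Rabs (t - x0) < dl -> g (x0, y0) <= h t /\ is_derive h t (gx (t, y0))).
  { intros t Ht. apply (Hq (t, y0)). rewrite dist2_horizontal, Rabs_minus_sym. exact Ht. }
  assert (HD : is_derive (Derive h) x0 gxx).
  { apply (is_derive_ext_loc (fun t => gx (t, y0))); [|exact Hxx].
    exists (mkposreal dl Hdl). intros t Ht. symmetry. apply is_derive_unique, Hnear, Ht. }
  rewrite <- (is_derive_unique _ _ _ HD).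
  apply (Derive2_nonneg_at_local_min h x0 dl Hdl).
  - intros t Ht. apply Hnear, Ht.
  - intros t Ht. eexists. apply Hnear, Ht.
  - eexists. exact HD.
Qed.

Lemma dyy_nonneg_at_local_min (g gy : pt -> R) (gyy : R) q0 dl : 0 < dl ->
  (forall q, dist2 q0 q < dl ->
     g q0 <= g q /\ is_derive (fun t => g (fst q, t)) (snd q) (gy q)) ->
  is_derive (fun t => gy (fst q0, t)) (snd q0) gyy -> 0 <= gyy.
Proof.
  intros Hdl Hq Hyy. destruct q0 as [x0 y0]. set (sw := fun q : pt => (snd q, fst q)).
  apply (dxx_nonneg_at_local_min (fun q => g (sw q)) (fun q => gy (sw q)) gyy (y0, x0) dl Hdl);
    [|exact Hyy].
  intros [a b] Hd. apply (Hq (b, a)). rewrite <- dist2_swap. exact Hd.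
Qed.

(** * Real and imaginary parts of complex powers *)

Lemma is_derive_Rplus (f g : R -> R) (x df dg : R) : is_derive f x df -> is_derive g x dg ->
  is_derive (fun t => f t + g t) x (df + dg).
Proof. rewrite !is_derive_Reals. apply derivable_pt_lim_plus. Qed.

Lemma is_derive_Rminus (f g : R -> R) (x df dg : R) : is_derive f x df -> is_derive g x dg ->
  is_derive (fun t => f t - g t) x (df - dg).
Proof. rewrite !is_derive_Reals. apply derivable_pt_lim_minus. Qed.

Lemma is_derive_Rmult (f g : R -> R) (x df dg : R) : is_derive f x df -> is_derive g x dg ->
  is_derive (fun t => f t * g t) x (df * g x + f x * dg).
Proof. rewrite !is_derive_Reals. apply derivable_pt_lim_mult. Qed.

Lemma is_derive_Rcomp (f g : R -> R) (x y dg df : R) : is_derive g x dg -> g x = y ->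
  is_derive f y df -> is_derive (fun t => f (g t)) x (df * dg).
Proof.
  intros H1 <- H2. rewrite is_derive_Reals in *. exact (derivable_pt_lim_comp g f x dg df H1 H2).
Qed.

Lemma is_derive_eq (f : R -> R) (x l1 l2 : R) : is_derive f x l1 -> l1 = l2 -> is_derive f x l2.
Proof. intros H <-; exact H. Qed.

Lemma is_derive_Rpower y b : 0 < y -> is_derive (fun x => Rpower x b) y (b * Rpower y (b - 1)).
Proof. intros. apply is_derive_Reals. apply derivable_pt_lim_power; auto. Qed.

Lemma is_derive_shift (g : R -> R) x1 l : is_derive g 0 l -> is_derive (fun t => g (t - x1)) x1 l.
Proof.
  intros H. replace l with (l * 1) by ring.
  apply (is_derive_Rcomp g (fun t => t - x1) x1 0); [|simpl; ring|exact H].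
  apply is_derive_Reals. replace 1 with (1 - 0) by ring.
  apply derivable_pt_lim_minus; [apply derivable_pt_lim_id|apply derivable_pt_lim_const].
Qed.

Lemma Rpower_pred r b : 0 < r -> Rpower r b = Rpower r (b - 1) * r.
Proof. intros. replace b with ((b - 1) + 1) at 1 by ring. rewrite Rpower_plus, Rpower_1; auto. Qed.

Lemma Rpower_div x y b : 0 < x -> 0 < y -> Rpower (x / y) b = Rpower x b / Rpower y b.
Proof.
  intros. unfold Rdiv. rewrite <- Rpower_mult_distr by (auto; apply Rinv_0_lt_compat; auto).
  f_equal. unfold Rpower. rewrite ln_Rinv, <- exp_Ropp by auto. f_equal; ring.
Qed.

Lemma Rpower_1_l b : Rpower 1 b = 1.
Proof. unfold Rpower. rewrite ln_1, Rmult_0_r, exp_0. reflexivity. Qed.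

Lemma Rpower_pos x b : 0 < Rpower x b.
Proof. apply exp_pos. Qed.

Definition polar_rad (X Y : R) := sqrt (X ^ 2 + Y ^ 2).
(* The principal argument, by the half-angle formula; meaningful only off the cut
   [polar_rad X Y + X = 0], i.e. away from the ray [X <= 0, Y = 0]. *)
Definition polar_ang (X Y : R) := 2 * atan (Y / (polar_rad X Y + X)).
Definition cpow_re (b X Y : R) := Rpower (polar_rad X Y) b * cos (b * polar_ang X Y).
Definition cpow_im (b X Y : R) := Rpower (polar_rad X Y) b * sin (b * polar_ang X Y).

Lemma polar_rad_sq X Y : polar_rad X Y ^ 2 = X ^ 2 + Y ^ 2.
Proof. unfold polar_rad. rewrite pow2_sqrt; nra. Qed.

Lemma Rabs_le_polar_rad X Y : Rabs X <= polar_rad X Y.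
Proof. unfold polar_rad. rewrite <- sqrt_Rsqr_abs. apply sqrt_le_1_alt. unfold Rsqr. nra. Qed.

Lemma polar_rad_pos X Y : 0 < polar_rad X Y + X -> 0 < polar_rad X Y.
Proof. intros H. pose proof (Rabs_le_polar_rad X Y). unfold Rabs in *; destruct Rcase_abs; lra. Qed.

Lemma cos_sin_polar_ang X Y : 0 < polar_rad X Y + X ->
  cos (polar_ang X Y) = X / polar_rad X Y /\ sin (polar_ang X Y) = Y / polar_rad X Y.
Proof.
  intros H. pose proof (polar_rad_pos _ _ H) as Hr. pose proof (polar_rad_sq X Y) as Hs.
  set (r := polar_rad X Y) in *. unfold polar_ang. fold r.
  set (t := Y / (r + X)).
  assert (Ht : 1 + t² = 2 * r / (r + X)).
  { unfold t, Rsqr. field_simplify_eq; [|lra]. nsatz. }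
  assert (Hq : 0 < 1 + t²) by (pose proof (Rle_0_sqr t); lra).
  pose proof (sqrt_lt_R0 _ Hq) as Hsq. pose proof (sqrt_sqrt _ (Rlt_le _ _ Hq)) as Hss.
  replace (2 * atan t) with (atan t + atan t) by ring.
  rewrite cos_plus, sin_plus, cos_atan, sin_atan.
  set (q := sqrt (1 + t²)) in *.
  split.
  - replace (1 / q * (1 / q) - t / q * (t / q)) with ((1 - t²) / (q * q))
      by (unfold Rsqr; field; intro; lra).
    rewrite Hss, Ht. unfold t, Rsqr. field_simplify_eq; [|lra]. lra.
  - replace (t / q * (1 / q) + 1 / q * (t / q)) with ((2 * t) / (q * q)) by (field; intro; lra).
    rewrite Hss, Ht. unfold t. field. lra.
Qed.

Lemma polar_rad_polar s p : 0 <= s -> polar_rad (s * cos p) (s * sin p) = s.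
Proof.
  intros Hs. unfold polar_rad. replace ((s * cos p) ^ 2 + (s * sin p) ^ 2) with (s ^ 2).
  - apply sqrt_pow2, Hs.
  - pose proof (sin2_cos2 p). unfold Rsqr in H. nra.
Qed.

Lemma polar_ang_polar s p : 0 < s -> - PI < p < PI -> polar_ang (s * cos p) (s * sin p) = p.
Proof.
  intros Hs Hp. unfold polar_ang. rewrite polar_rad_polar by lra.
  assert (Hc2 : 0 < cos (p / 2)) by (apply cos_gt_0; lra).
  assert (E : s * sin p / (s + s * cos p) = tan (p / 2)).
  { replace p with (2 * (p / 2)) at 1 2 by field. rewrite sin_2a, cos_2a_cos. unfold tan.
    field. split; [apply Rgt_not_eq; lra|].
    assert (0 < s * (cos (p / 2) * cos (p / 2))) by (apply Rmult_lt_0_compat; nra).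
    apply Rgt_not_eq. nra. }
  rewrite E, atan_tan by lra. field.
Qed.

Lemma polar_rad_cut_polar s p : 0 < s -> - PI < p < PI ->
  0 < polar_rad (s * cos p) (s * sin p) + s * cos p.
Proof.
  intros Hs Hp. rewrite polar_rad_polar by lra. pose proof PI_RGT_0.
  assert (-1 < cos p).
  { rewrite <- cos_PI. destruct (Rle_or_lt 0 p).
    - apply cos_decreasing_1; lra.
    - rewrite <- (cos_neg p). apply cos_decreasing_1; lra. }
  nra.
Qed.

Lemma cpow_re_pred b X Y : 0 < polar_rad X Y + X ->
  X * cpow_re (b - 1) X Y - Y * cpow_im (b - 1) X Y = cpow_re b X Y.
Proof.
  intros H. pose proof (polar_rad_pos _ _ H) as Hr.
  destruct (cos_sin_polar_ang _ _ H) as [Hc Hs].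
  unfold cpow_re, cpow_im. set (r := polar_rad X Y) in *. set (th := polar_ang X Y) in *.
  replace X with (r * cos th) at 1 by (rewrite Hc; field; lra).
  replace Y with (r * sin th) at 1 by (rewrite Hs; field; lra).
  rewrite (Rpower_pred r b Hr).
  replace (b * th) with ((b - 1) * th + th) by ring. rewrite cos_plus. ring.
Qed.

Lemma cpow_re_double b X Y : cpow_re (2 * b) X Y = cpow_re b X Y ^ 2 - cpow_im b X Y ^ 2.
Proof.
  unfold cpow_re, cpow_im. set (th := polar_ang X Y).
  replace (2 * b) with (b + b) by ring. rewrite Rpower_plus.
  replace ((b + b) * th) with (b * th + b * th) by ring. rewrite cos_plus. ring.
Qed.

Lemma is_derive_polar_rad_line X Y a c : 0 < X ^ 2 + Y ^ 2 ->
  is_derive (fun t => polar_rad (X + a * t) (Y + c * t)) 0 ((X * a + Y * c) / polar_rad X Y).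
Proof.
  intros H. unfold polar_rad. auto_derive.
  - replace (X + a * 0) with X by ring. replace (Y + c * 0) with Y by ring. nra.
  - replace (X + a * 0) with X by ring. replace (Y + c * 0) with Y by ring.
    assert (0 < sqrt (X ^ 2 + Y ^ 2)) by (apply sqrt_lt_R0; auto).
    replace (X * (X * 1) + Y * (Y * 1)) with (X ^ 2 + Y ^ 2) by ring. field. lra.
Qed.

Lemma is_derive_polar_ang_line X Y a c : 0 < polar_rad X Y + X ->
  is_derive (fun t => polar_ang (X + a * t) (Y + c * t)) 0 ((X * c - Y * a) / polar_rad X Y ^ 2).
Proof.
  intros H. pose proof (polar_rad_pos _ _ H) as Hr. pose proof (polar_rad_sq X Y) as Hs.
  assert (HXY : 0 < X ^ 2 + Y ^ 2) by (rewrite <- Hs; nra).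
  unfold polar_ang, polar_rad in *. auto_derive.
  - replace (X + a * 0) with X by ring. replace (Y + c * 0) with Y by ring.
    replace (X * (X * 1) + Y * (Y * 1)) with (X ^ 2 + Y ^ 2) by ring. repeat split; auto; lra.
  - replace (X + a * 0) with X by ring. replace (Y + c * 0) with Y by ring.
    replace (X * (X * 1) + Y * (Y * 1)) with (X ^ 2 + Y ^ 2) by ring.
    set (r := sqrt (X ^ 2 + Y ^ 2)) in *.
    assert (0 < 1 + Y / (r + X) * (Y / (r + X)))
      by (pose proof (Rle_0_sqr (Y / (r + X))); unfold Rsqr in *; lra).
    clearbody r. field_simplify_eq.
    + assert (HY2 : Y ^ 2 = r ^ 2 - X ^ 2) by lra.
      replace (Y ^ 3) with (Y * Y ^ 2) by ring. rewrite HY2. ring.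
    + repeat split; try (intro; nra).
Qed.

(* Holomorphy of z^b along the line t |-> z + (a + i c) t: the derivative is b z^(b-1) (a + i c). *)
Lemma is_derive_cpow_line b X Y a c : 0 < polar_rad X Y + X ->
  is_derive (fun t => cpow_re b (X + a * t) (Y + c * t)) 0
    (b * (a * cpow_re (b - 1) X Y - c * cpow_im (b - 1) X Y)) /\
  is_derive (fun t => cpow_im b (X + a * t) (Y + c * t)) 0
    (b * (c * cpow_re (b - 1) X Y + a * cpow_im (b - 1) X Y)).
Proof.
  intros H. pose proof (polar_rad_pos _ _ H) as Hr. pose proof (polar_rad_sq X Y) as Hs.
  assert (HXY : 0 < X ^ 2 + Y ^ 2) by (rewrite <- Hs; nra).
  assert (E0 : polar_rad (X + a * 0) (Y + c * 0) = polar_rad X Y)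
    by (rewrite !Rmult_0_r, !Rplus_0_r; reflexivity).
  assert (E1 : b * polar_ang (X + a * 0) (Y + c * 0) = b * polar_ang X Y)
    by (rewrite !Rmult_0_r, !Rplus_0_r; reflexivity).
  pose proof (is_derive_Rcomp (fun x => Rpower x b) _ 0 _ _ _
    (is_derive_polar_rad_line X Y a c HXY) E0 (is_derive_Rpower _ b Hr)) as DP.
  pose proof (is_derive_scal _ 0 b _ (is_derive_polar_ang_line X Y a c H)) as DA.
  pose proof (is_derive_Rmult _ _ 0 _ _ DP (is_derive_Rcomp cos _ 0 _ _ _ DA E1 (is_derive_cos _)))
    as Q1.
  pose proof (is_derive_Rmult _ _ 0 _ _ DP (is_derive_Rcomp sin _ 0 _ _ _ DA E1 (is_derive_sin _)))
    as Q2.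
  cbv beta in Q1, Q2. rewrite E0, E1 in Q1, Q2.
  destruct (cos_sin_polar_ang X Y H) as [Hc Hsn].
  unfold cpow_re, cpow_im. set (r := polar_rad X Y) in *. set (th := polar_ang X Y) in *.
  assert (Ec : cos ((b - 1) * th) = cos (b * th) * (X / r) + sin (b * th) * (Y / r)).
  { replace ((b - 1) * th) with (b * th - th) by ring. rewrite cos_minus, Hc, Hsn. ring. }
  assert (Es : sin ((b - 1) * th) = sin (b * th) * (X / r) - cos (b * th) * (Y / r)).
  { replace ((b - 1) * th) with (b * th - th) by ring. rewrite sin_minus, Hc, Hsn. ring. }
  rewrite (Rpower_pred r b Hr) in Q1, Q2.
  split; [eapply is_derive_eq; [exact Q1|] | eapply is_derive_eq; [exact Q2|]];
    rewrite Ec, Es; field; lra.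
Qed.

(** * Polar coordinates around a point *)

Lemma sqrt_sum_sq_le x y : sqrt (x ^ 2 + y ^ 2) <= Rabs x + Rabs y.
Proof.
  pose proof (Rabs_pos x); pose proof (Rabs_pos y).
  rewrite <- (sqrt_pow2 (Rabs x + Rabs y)) by lra.
  apply sqrt_le_1_alt. rewrite <- (pow2_abs x), <- (pow2_abs y). nra.
Qed.

Lemma dist2_le_sum a b : dist2 a b <= Rabs (fst a - fst b) + Rabs (snd a - snd b).
Proof. apply sqrt_sum_sq_le. Qed.

Lemma dist2_sym a b : dist2 a b = dist2 b a.
Proof. unfold dist2. f_equal. ring. Qed.

Lemma dist2_refl a : dist2 a a = 0.
Proof. unfold dist2. rewrite !Rminus_eq_0. simpl. rewrite !Rmult_0_l, Rplus_0_l. apply sqrt_0. Qed.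

Lemma dist2_pos a b : 0 <= dist2 a b.
Proof. apply sqrt_pos. Qed.

Lemma dist2_eq0 a b : dist2 a b = 0 -> a = b.
Proof.
  unfold dist2. intros H.
  pose proof (pow2_ge_0 (fst a - fst b)). pose proof (pow2_ge_0 (snd a - snd b)).
  apply sqrt_eq_0 in H; [|lra].
  apply injective_projections; apply Rminus_diag_uniq, Rsqr_0_uniq; unfold Rsqr; lra.
Qed.

Lemma dist2_triang a b c : dist2 a c <= dist2 a b + dist2 b c.
Proof.
  pose proof (triangle (fst a) (snd a) (fst c) (snd c) (fst b) (snd b)) as H.
  unfold dist_euc in H. rewrite !Rsqr_pow2 in H. exact H.
Qed.

Section Frame.

Variables (P e : pt).

(* Coordinates of [q - P] in the orthonormal frame [(e, e rotated by pi/2)]. *)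
Definition frame_x (q : pt) := fst e * (fst q - fst P) + snd e * (snd q - snd P).
Definition frame_y (q : pt) := - snd e * (fst q - fst P) + fst e * (snd q - snd P).
Definition off_cut (q : pt) := 0 < polar_rad (frame_x q) (frame_y q) + frame_x q.
Definition sector_re b (q : pt) := cpow_re b (frame_x q) (frame_y q).
Definition sector_im b (q : pt) := cpow_im b (frame_x q) (frame_y q).
Definition polar_pt (s p : R) : pt :=
  (fst P + s * (fst e * cos p - snd e * sin p), snd P + s * (snd e * cos p + fst e * sin p)).

Lemma polar_pt_0 p : polar_pt 0 p = P.
Proof. unfold polar_pt. apply injective_projections; simpl; ring. Qed.

Lemma is_derive_sector_x b q : off_cut q ->
  is_derive (fun t => sector_re b (t, snd q)) (fst q)
    (b * (fst e * sector_re (b - 1) q + snd e * sector_im (b - 1) q)) /\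
  is_derive (fun t => sector_im b (t, snd q)) (fst q)
    (b * (fst e * sector_im (b - 1) q - snd e * sector_re (b - 1) q)).
Proof.
  intros H. destruct (is_derive_cpow_line b (frame_x q) (frame_y q) (fst e) (- snd e) H)
    as [H1 H2].
  split.
  - eapply is_derive_ext; [|apply (is_derive_shift
      (fun h => cpow_re b (frame_x q + fst e * h) (frame_y q + - snd e * h)) (fst q));
      eapply is_derive_eq; [exact H1|]].
    + intros t. unfold sector_re, frame_x, frame_y; simpl. f_equal; ring.
    + unfold sector_re, sector_im. ring.
  - eapply is_derive_ext; [|apply (is_derive_shift
      (fun h => cpow_im b (frame_x q + fst e * h) (frame_y q + - snd e * h)) (fst q));
      eapply is_derive_eq; [exact H2|]].
    + intros t. unfold sector_im, frame_x, frame_y; simpl. f_equal; ring.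
    + unfold sector_re, sector_im. ring.
Qed.

Lemma is_derive_sector_y b q : off_cut q ->
  is_derive (fun t => sector_re b (fst q, t)) (snd q)
    (b * (snd e * sector_re (b - 1) q - fst e * sector_im (b - 1) q)) /\
  is_derive (fun t => sector_im b (fst q, t)) (snd q)
    (b * (fst e * sector_re (b - 1) q + snd e * sector_im (b - 1) q)).
Proof.
  intros H. destruct (is_derive_cpow_line b (frame_x q) (frame_y q) (snd e) (fst e) H)
    as [H1 H2].
  split.
  - eapply is_derive_ext; [|apply (is_derive_shift
      (fun h => cpow_re b (frame_x q + snd e * h) (frame_y q + fst e * h)) (snd q));
      eapply is_derive_eq; [exact H1|]].
    + intros t. unfold sector_re, frame_x, frame_y; simpl. f_equal; ring.
    + unfold sector_re, sector_im. ring.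
  - eapply is_derive_ext; [|apply (is_derive_shift
      (fun h => cpow_im b (frame_x q + snd e * h) (frame_y q + fst e * h)) (snd q));
      eapply is_derive_eq; [exact H2|]].
    + intros t. unfold sector_im, frame_x, frame_y; simpl. f_equal; ring.
    + unfold sector_re, sector_im. ring.
Qed.

Hypothesis e_unit : fst e ^ 2 + snd e ^ 2 = 1.

Lemma frame_x_polar_pt s p : frame_x (polar_pt s p) = s * cos p.
Proof. unfold frame_x, polar_pt; simpl. rewrite <- (Rmult_1_r (s * cos p)), <- e_unit. ring. Qed.

Lemma frame_y_polar_pt s p : frame_y (polar_pt s p) = s * sin p.
Proof. unfold frame_y, polar_pt; simpl. rewrite <- (Rmult_1_r (s * sin p)), <- e_unit. ring. Qed.

Lemma frame_rad_sq q :
  polar_rad (frame_x q) (frame_y q) ^ 2 = (fst q - fst P) ^ 2 + (snd q - snd P) ^ 2.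
Proof.
  rewrite polar_rad_sq. unfold frame_x, frame_y.
  rewrite <- (Rmult_1_r ((fst q - fst P) ^ 2 + _)), <- e_unit. ring.
Qed.

Lemma off_cut_polar_pt s p : 0 < s -> - PI < p < PI -> off_cut (polar_pt s p).
Proof.
  intros Hs Hp. unfold off_cut. rewrite frame_x_polar_pt, frame_y_polar_pt.
  apply polar_rad_cut_polar; auto.
Qed.

Lemma sector_polar_pt b s p : 0 < s -> - PI < p < PI ->
  sector_re b (polar_pt s p) = Rpower s b * cos (b * p) /\
  sector_im b (polar_pt s p) = Rpower s b * sin (b * p).
Proof.
  intros Hs Hp. unfold sector_re, sector_im, cpow_re, cpow_im.
  rewrite frame_x_polar_pt, frame_y_polar_pt, polar_rad_polar, polar_ang_polar by lra. auto.
Qed.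

Lemma dist2_polar_pt s p : 0 <= s -> dist2 (polar_pt s p) P = s.
Proof.
  intros Hs. unfold dist2.
  rewrite <- frame_rad_sq, frame_x_polar_pt, frame_y_polar_pt, polar_rad_polar by exact Hs.
  apply sqrt_pow2, Hs.
Qed.

Lemma polar_pt_of_frame q s p :
  frame_x q = s * cos p -> frame_y q = s * sin p -> q = polar_pt s p.
Proof.
  intros Hx Hy. unfold polar_pt.
  replace (s * (fst e * cos p - snd e * sin p)) with (fst e * (s * cos p) - snd e * (s * sin p))
    by ring.
  replace (s * (snd e * cos p + fst e * sin p)) with (snd e * (s * cos p) + fst e * (s * sin p))
    by ring.
  rewrite <- Hx, <- Hy. unfold frame_x, frame_y.
  apply injective_projections; simpl.
  - transitivity (fst P + (fst q - fst P) * (fst e ^ 2 + snd e ^ 2)); [rewrite e_unit|]; ring.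
  - transitivity (snd P + (snd q - snd P) * (fst e ^ 2 + snd e ^ 2)); [rewrite e_unit|]; ring.
Qed.

Lemma polar_pt_surj q : exists p, - PI < p <= PI /\ q = polar_pt (dist2 q P) p.
Proof.
  pose proof PI_RGT_0. set (X := frame_x q). set (Y := frame_y q).
  assert (Hr : dist2 q P = polar_rad X Y)
    by (unfold dist2; rewrite <- frame_rad_sq; apply sqrt_pow2, sqrt_pos).
  pose proof (polar_rad_sq X Y) as Hsq. pose proof (Rabs_le_polar_rad X Y) as Habs.
  rewrite Hr. set (r := polar_rad X Y) in *.
  destruct (Rle_or_lt (r + X) 0) as [Hcut|Hoff].
  - assert (HX : X = - r) by (unfold Rabs in Habs; destruct Rcase_abs; lra).
    assert (HY : Y = 0) by (apply Rsqr_0_uniq; unfold Rsqr; rewrite HX in Hsq; nra).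
    exists PI. split; [lra|].
    apply polar_pt_of_frame; rewrite ?cos_PI, ?sin_PI; fold X Y; lra.
  - pose proof (polar_rad_pos X Y Hoff) as Hrpos. destruct (cos_sin_polar_ang X Y Hoff) as [Hc Hs].
    fold r in Hc, Hs, Hrpos. exists (polar_ang X Y). split.
    + unfold polar_ang. pose proof (atan_bound (Y / (polar_rad X Y + X))). lra.
    + apply polar_pt_of_frame; fold X Y; [rewrite Hc|rewrite Hs]; field; lra.
Qed.

End Frame.

Lemma polar_pt_continuous P e s p eps : 0 < eps -> exists dl, 0 < dl /\
  forall s' p', Rabs (s' - s) < dl -> Rabs (p' - p) < dl ->
    dist2 (polar_pt P e s' p') (polar_pt P e s p) < eps.
Proof.
  intros Heps.
  set (g1 := fun p => fst e * cos p - snd e * sin p).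
  set (g2 := fun p => snd e * cos p + fst e * sin p).
  destruct (Rmult_continuous_eps s (g1 p) (eps / 2)) as [h1 [Hh1 M1]]; [lra|].
  destruct (Rmult_continuous_eps s (g2 p) (eps / 2)) as [h2 [Hh2 M2]]; [lra|].
  destruct (continuity_pt_eps g1 p ltac:(unfold g1; reg) h1 Hh1) as [d1 [Hd1 C1]].
  destruct (continuity_pt_eps g2 p ltac:(unfold g2; reg) h2 Hh2) as [d2 [Hd2 C2]].
  exists (Rmin (Rmin h1 h2) (Rmin d1 d2)).
  split; [repeat apply Rmin_pos; auto|]. intros s' p' Hs Hp.
  pose proof (Rmin_l (Rmin h1 h2) (Rmin d1 d2)). pose proof (Rmin_r (Rmin h1 h2) (Rmin d1 d2)).
  pose proof (Rmin_l h1 h2). pose proof (Rmin_r h1 h2).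
  pose proof (Rmin_l d1 d2). pose proof (Rmin_r d1 d2).
  eapply Rle_lt_trans; [apply dist2_le_sum|]. unfold polar_pt; simpl.
  replace (fst P + s' * (fst e * cos p' - snd e * sin p')
           - (fst P + s * (fst e * cos p - snd e * sin p)))
    with (s' * g1 p' - s * g1 p) by (unfold g1; ring).
  replace (snd P + s' * (snd e * cos p' + fst e * sin p')
           - (snd P + s * (snd e * cos p + fst e * sin p)))
    with (s' * g2 p' - s * g2 p) by (unfold g2; ring).
  assert (Rabs (s' * g1 p' - s * g1 p) < eps / 2) by (apply M1; [|apply C1]; lra).
  assert (Rabs (s' * g2 p' - s * g2 p) < eps / 2) by (apply M2; [|apply C2]; lra).
  lra.
Qed.

(** * The barrier *)

Section Barrier.

Variables (P e : pt) (al rho k M : R).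

(* [harm_barrier = Re (2 z - z^2)] with [z = (w / rho)^al], [w] the complex coordinate of
   [q - P] in the frame. *)
Definition harm_barrier (q : pt) :=
  2 / Rpower rho al * sector_re P e al q - / Rpower rho (2 * al) * sector_re P e (2 * al) q.
Definition helm_factor (q : pt) := 1 - k ^ 2 * ((fst q - fst P) ^ 2 + (snd q - snd P) ^ 2) / 2.
Definition barrier (q : pt) := 2 * M * (harm_barrier q * helm_factor q).

Definition harm_barrier_x q :=
  2 / Rpower rho al * (al * (fst e * sector_re P e (al - 1) q + snd e * sector_im P e (al - 1) q))
  - / Rpower rho (2 * al) * (2 * al * (fst e * sector_re P e (2 * al - 1) q
                                       + snd e * sector_im P e (2 * al - 1) q)).
Definition harm_barrier_y q :=
  2 / Rpower rho al * (al * (snd e * sector_re P e (al - 1) q - fst e * sector_im P e (al - 1) q))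
  - / Rpower rho (2 * al) * (2 * al * (snd e * sector_re P e (2 * al - 1) q
                                       - fst e * sector_im P e (2 * al - 1) q)).
Definition harm_barrier_xx q :=
  2 / Rpower rho al * (al * (al - 1) * ((fst e ^ 2 - snd e ^ 2) * sector_re P e (al - 2) q
                                       + 2 * fst e * snd e * sector_im P e (al - 2) q))
  - / Rpower rho (2 * al) * (2 * al * (2 * al - 1) *
      ((fst e ^ 2 - snd e ^ 2) * sector_re P e (2 * al - 2) q
       + 2 * fst e * snd e * sector_im P e (2 * al - 2) q)).
Definition harm_barrier_yy q :=
  2 / Rpower rho al * (al * (al - 1) * ((snd e ^ 2 - fst e ^ 2) * sector_re P e (al - 2) q
                                       - 2 * fst e * snd e * sector_im P e (al - 2) q))
  - / Rpower rho (2 * al) * (2 * al * (2 * al - 1) *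
      ((snd e ^ 2 - fst e ^ 2) * sector_re P e (2 * al - 2) q
       - 2 * fst e * snd e * sector_im P e (2 * al - 2) q)).
Definition helm_factor_x (q : pt) := - k ^ 2 * (fst q - fst P).
Definition helm_factor_y (q : pt) := - k ^ 2 * (snd q - snd P).
Definition barrier_x q :=
  2 * M * (harm_barrier_x q * helm_factor q + harm_barrier q * helm_factor_x q).
Definition barrier_y q :=
  2 * M * (harm_barrier_y q * helm_factor q + harm_barrier q * helm_factor_y q).
Definition barrier_xx q := 2 * M * (harm_barrier_xx q * helm_factor q
  + 2 * (harm_barrier_x q * helm_factor_x q) + harm_barrier q * (- k ^ 2)).
Definition barrier_yy q := 2 * M * (harm_barrier_yy q * helm_factor q
  + 2 * (harm_barrier_y q * helm_factor_y q) + harm_barrier q * (- k ^ 2)).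

Lemma is_derive_helm_factor_x q :
  is_derive (fun t => helm_factor (t, snd q)) (fst q) (helm_factor_x q).
Proof. unfold helm_factor, helm_factor_x. simpl. auto_derive; auto. field. Qed.
Lemma is_derive_helm_factor_y q :
  is_derive (fun t => helm_factor (fst q, t)) (snd q) (helm_factor_y q).
Proof. unfold helm_factor, helm_factor_y. simpl. auto_derive; auto. field. Qed.
Lemma is_derive_helm_factor_xx q :
  is_derive (fun t => helm_factor_x (t, snd q)) (fst q) (- k ^ 2).
Proof. unfold helm_factor_x. simpl. auto_derive; auto. field. Qed.
Lemma is_derive_helm_factor_yy q :
  is_derive (fun t => helm_factor_y (fst q, t)) (snd q) (- k ^ 2).
Proof. unfold helm_factor_y. simpl. auto_derive; auto. field. Qed.

Lemma is_derive_harm_barrier_x q : off_cut P e q ->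
  is_derive (fun t => harm_barrier (t, snd q)) (fst q) (harm_barrier_x q).
Proof.
  intros H. destruct (is_derive_sector_x P e al q H) as [A1 _].
  destruct (is_derive_sector_x P e (2 * al) q H) as [A2 _].
  unfold harm_barrier. eapply is_derive_eq.
  - apply is_derive_Rminus; apply is_derive_scal; [exact A1|exact A2].
  - unfold harm_barrier_x. ring.
Qed.
Lemma is_derive_harm_barrier_y q : off_cut P e q ->
  is_derive (fun t => harm_barrier (fst q, t)) (snd q) (harm_barrier_y q).
Proof.
  intros H. destruct (is_derive_sector_y P e al q H) as [A1 _].
  destruct (is_derive_sector_y P e (2 * al) q H) as [A2 _].
  unfold harm_barrier. eapply is_derive_eq.
  - apply is_derive_Rminus; apply is_derive_scal; [exact A1|exact A2].
  - unfold harm_barrier_y. ring.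
Qed.
Lemma is_derive_harm_barrier_xx q : off_cut P e q ->
  is_derive (fun t => harm_barrier_x (t, snd q)) (fst q) (harm_barrier_xx q).
Proof.
  intros H. destruct (is_derive_sector_x P e (al - 1) q H) as [A1 B1].
  destruct (is_derive_sector_x P e (2 * al - 1) q H) as [A2 B2].
  unfold harm_barrier_x. eapply is_derive_eq.
  - apply is_derive_Rminus; do 2 apply is_derive_scal; apply is_derive_Rplus;
      apply is_derive_scal; eassumption.
  - unfold harm_barrier_xx. replace (al - 1 - 1) with (al - 2) by ring.
    replace (2 * al - 1 - 1) with (2 * al - 2) by ring. ring.
Qed.
Lemma is_derive_harm_barrier_yy q : off_cut P e q ->
  is_derive (fun t => harm_barrier_y (fst q, t)) (snd q) (harm_barrier_yy q).
Proof.
  intros H. destruct (is_derive_sector_y P e (al - 1) q H) as [A1 B1].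
  destruct (is_derive_sector_y P e (2 * al - 1) q H) as [A2 B2].
  unfold harm_barrier_y. eapply is_derive_eq.
  - apply is_derive_Rminus; do 2 apply is_derive_scal; apply is_derive_Rminus;
      apply is_derive_scal; eassumption.
  - unfold harm_barrier_yy. replace (al - 1 - 1) with (al - 2) by ring.
    replace (2 * al - 1 - 1) with (2 * al - 2) by ring. ring.
Qed.

Lemma is_derive_barrier_x q : off_cut P e q ->
  is_derive (fun t => barrier (t, snd q)) (fst q) (barrier_x q).
Proof.
  intros H. unfold barrier. eapply is_derive_eq.
  - apply is_derive_scal, is_derive_Rmult;
      [apply is_derive_harm_barrier_x, H|apply is_derive_helm_factor_x].
  - reflexivity.
Qed.
Lemma is_derive_barrier_y q : off_cut P e q ->
  is_derive (fun t => barrier (fst q, t)) (snd q) (barrier_y q).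
Proof.
  intros H. unfold barrier. eapply is_derive_eq.
  - apply is_derive_scal, is_derive_Rmult;
      [apply is_derive_harm_barrier_y, H|apply is_derive_helm_factor_y].
  - reflexivity.
Qed.
Lemma is_derive_barrier_xx q : off_cut P e q ->
  is_derive (fun t => barrier_x (t, snd q)) (fst q) (barrier_xx q).
Proof.
  intros H. destruct q as [q1 q2]. unfold barrier_x. eapply is_derive_eq.
  - apply is_derive_scal, is_derive_Rplus; apply is_derive_Rmult.
    + apply is_derive_harm_barrier_xx, H.
    + apply is_derive_helm_factor_x.
    + apply is_derive_harm_barrier_x, H.
    + apply is_derive_helm_factor_xx.
  - unfold barrier_xx. simpl. ring.
Qed.
Lemma is_derive_barrier_yy q : off_cut P e q ->
  is_derive (fun t => barrier_y (fst q, t)) (snd q) (barrier_yy q).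
Proof.
  intros H. destruct q as [q1 q2]. unfold barrier_y. eapply is_derive_eq.
  - apply is_derive_scal, is_derive_Rplus; apply is_derive_Rmult.
    + apply is_derive_harm_barrier_yy, H.
    + apply is_derive_helm_factor_y.
    + apply is_derive_harm_barrier_y, H.
    + apply is_derive_helm_factor_yy.
  - unfold barrier_yy. simpl. ring.
Qed.

Lemma barrier_helmholtz_expansion q :
  barrier_xx q + barrier_yy q + k ^ 2 * barrier q
  = 2 * M * ((harm_barrier_xx q + harm_barrier_yy q) * helm_factor q
      - 2 * k ^ 2 * ((fst q - fst P) * harm_barrier_x q + (snd q - snd P) * harm_barrier_y q)
      - 2 * k ^ 2 * harm_barrier q + k ^ 2 * harm_barrier q * helm_factor q).
Proof. unfold barrier_xx, barrier_yy, barrier, helm_factor_x, helm_factor_y. ring. Qed.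

Lemma harm_barrier_laplacian q : harm_barrier_xx q + harm_barrier_yy q = 0.
Proof. unfold harm_barrier_xx, harm_barrier_yy. ring. Qed.

(* Euler's identity for the homogeneous harmonic function [harm_barrier]. *)
Lemma harm_barrier_radial q : off_cut P e q ->
  (fst q - fst P) * harm_barrier_x q + (snd q - snd P) * harm_barrier_y q
  = 2 / Rpower rho al * (al * sector_re P e al q)
    - / Rpower rho (2 * al) * (2 * al * sector_re P e (2 * al) q).
Proof.
  intros H. unfold sector_re.
  rewrite <- (cpow_re_pred al), <- (cpow_re_pred (2 * al)) by exact H.
  unfold harm_barrier_x, harm_barrier_y, sector_re, sector_im, frame_x, frame_y. ring.
Qed.

(* With [a + i b = z], the terms of [barrier_helmholtz_expansion] are
   [harm_barrier = 2 a - (a^2 - b^2)] and [x . grad harm_barrier = 2 al a - 2 al (a^2 - b^2)]. *)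
Lemma supersolution_inequality a b r : 0 < al -> 0 <= a <= 1 ->
  - 2 * k ^ 2 * (2 * al * a - 2 * al * (a ^ 2 - b ^ 2)) - 2 * k ^ 2 * (2 * a - (a ^ 2 - b ^ 2))
  + k ^ 2 * (2 * a - (a ^ 2 - b ^ 2)) * (1 - k ^ 2 * r ^ 2 / 2) <= 0.
Proof.
  intros Hal Ha.
  assert (0 <= k ^ 2) by apply pow2_ge_0.
  assert (0 <= k ^ 2 * r ^ 2) by (apply Rmult_le_pos; apply pow2_ge_0).
  assert (0 <= al * a * (1 - a)) by (apply Rmult_le_pos; [apply Rmult_le_pos|]; lra).
  assert (0 <= al * b ^ 2) by (apply Rmult_le_pos; [lra|apply pow2_ge_0]).
  assert (0 <= k ^ 2 * (4 * (al * a * (1 - a)) + 4 * al * b ^ 2 + (2 * a - (a ^ 2 - b ^ 2))))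
    by (apply Rmult_le_pos; nra).
  assert (0 <= k ^ 2 * (k ^ 2 * r ^ 2) * (2 * a - (a ^ 2 - b ^ 2)))
    by (apply Rmult_le_pos; [apply Rmult_le_pos|]; nra).
  nra.
Qed.

Hypotheses (e_unit : fst e ^ 2 + snd e ^ 2 = 1) (al_pos : 0 < al).

Lemma barrier_supersolution q : off_cut P e q -> 0 <= M ->
  0 <= cos (al * polar_ang (frame_x P e q) (frame_y P e q)) ->
  polar_rad (frame_x P e q) (frame_y P e q) <= rho ->
  barrier_xx q + barrier_yy q + k ^ 2 * barrier q <= 0.
Proof.
  intros H HM Hcos Hle.
  set (u := Rpower rho al).
  assert (Hu : 0 < u) by apply Rpower_pos.
  assert (Hu2 : Rpower rho (2 * al) = u ^ 2)
    by (unfold u; simpl; rewrite Rmult_1_r, <- Rpower_plus; f_equal; ring).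
  set (a := sector_re P e al q / u). set (b := sector_im P e al q / u).
  assert (Ha : 0 <= a <= 1).
  { unfold a, sector_re, cpow_re. split.
    - apply Rmult_le_pos; [|left; apply Rinv_0_lt_compat; auto].
      apply Rmult_le_pos; auto. left; apply Rpower_pos.
    - apply (Rmult_le_reg_r u); auto. field_simplify; [|lra].
      apply Rle_trans with (Rpower (polar_rad (frame_x P e q) (frame_y P e q)) al * 1).
      + apply Rmult_le_compat_l; [left; apply Rpower_pos| apply COS_bound].
      + rewrite Rmult_1_r. unfold u. apply Rle_Rpower_l; [lra|].
        split; [apply polar_rad_pos, H|exact Hle]. }
  assert (EW : harm_barrier q = 2 * a - (a ^ 2 - b ^ 2)).
  { unfold harm_barrier, a, b. fold u. rewrite Hu2. unfold sector_re at 2.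
    rewrite cpow_re_double. unfold sector_re, sector_im. field. lra. }
  assert (Erad : (fst q - fst P) * harm_barrier_x q + (snd q - snd P) * harm_barrier_y q
                 = 2 * al * a - 2 * al * (a ^ 2 - b ^ 2)).
  { rewrite (harm_barrier_radial q H), Hu2. unfold sector_re at 2. rewrite cpow_re_double.
    unfold a, b, sector_re, sector_im. fold u. field. lra. }
  rewrite barrier_helmholtz_expansion, harm_barrier_laplacian, Erad, EW.
  unfold helm_factor. rewrite <- (frame_rad_sq P e e_unit q).
  apply Rmult_le_0_l; [lra|].
  rewrite Rmult_0_l, Rminus_0_l.
  pose proof (supersolution_inequality a b (polar_rad (frame_x P e q) (frame_y P e q)) al_pos Ha).
  lra.
Qed.

End Barrier.

(** * The barrier in polar coordinates *)

(* [pos_pow x b = x^b] for [x > 0], extended by its limit [0] at [x = 0] when [b > 0]. *)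
Definition pos_pow (x b : R) := if Rlt_dec 0 x then Rpower x b else 0.
Definition harm_barrier_polar al rho s p :=
  2 * pos_pow (s / rho) al * cos (al * p) - pos_pow (s / rho) (2 * al) * cos (2 * al * p).
Definition helm_factor_polar k s := 1 - k ^ 2 * s ^ 2 / 2.

Lemma pos_pow_0 b : pos_pow 0 b = 0.
Proof. unfold pos_pow. destruct Rlt_dec; lra. Qed.

Lemma pos_pow_pos x b : 0 < x -> pos_pow x b = Rpower x b.
Proof. intros. unfold pos_pow. destruct Rlt_dec; [reflexivity|lra]. Qed.

Lemma pos_pow_bounds x b : 0 < b -> x <= 1 -> 0 <= pos_pow x b <= 1.
Proof.
  intros Hb Hx. unfold pos_pow. destruct (Rlt_dec 0 x); [|lra].
  split; [left; apply Rpower_pos|]. rewrite <- (Rpower_1_l b). apply Rle_Rpower_l; lra.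
Qed.

Lemma pos_pow_double x b : pos_pow x (2 * b) = pos_pow x b ^ 2.
Proof.
  unfold pos_pow. destruct Rlt_dec; [|ring].
  replace (2 * b) with (b + b) by ring. rewrite Rpower_plus. ring.
Qed.

Lemma pos_pow_continuous b x : 0 < b -> continuity_pt (fun s => pos_pow s b) x.
Proof.
  intros Hb. destruct (Rtotal_order x 0) as [Hx|[->|Hx]].
  - apply (continuity_pt_locally_ext (fun _ => 0) _ (- x));
      [lra| |apply continuity_pt_const; intros ? ?; auto].
    intros y Hy. unfold Rdist in Hy. unfold pos_pow. destruct (Rlt_dec 0 y); auto.
    unfold Rabs in Hy; destruct Rcase_abs; lra.
  - apply continuity_pt_of_eps. intros e He.
    exists (Rpower e (/ b)). split; [apply Rpower_pos|].
    intros y Hy. rewrite pos_pow_0, Rminus_0_r in *. unfold pos_pow.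
    destruct (Rlt_dec 0 y); [|rewrite Rabs_R0; auto].
    rewrite Rabs_pos_eq by (left; apply Rpower_pos).
    rewrite <- (Rpower_1 e He), <- (Rinv_l b) by lra. rewrite <- Rpower_mult.
    apply Rlt_Rpower_l; auto. rewrite Rabs_pos_eq in Hy; lra.
  - apply (continuity_pt_locally_ext (fun s => Rpower s b) _ x); [lra| |].
    + intros y Hy. unfold Rdist in Hy. symmetry. apply pos_pow_pos.
      unfold Rabs in Hy; destruct Rcase_abs; lra.
    + pose proof (derivable_pt_lim_power x b Hx) as Hd.
      exact (derivable_continuous_pt _ x (exist _ _ Hd)).
Qed.

Lemma harm_barrier_polar_bounds al rho s p : 0 < al -> 0 < rho -> 0 <= s <= rho ->
  Rabs (al * p) <= PI / 2 ->
  0 <= harm_barrier_polar al rho s p /\ harm_barrier_polar al rho s p <= 3 * pos_pow (s / rho) al /\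
  (s = rho -> 1 <= harm_barrier_polar al rho s p).
Proof.
  intros Hal Hr Hs Hp. pose proof PI_RGT_0.
  assert (Hc : 0 <= cos (al * p)) by (apply cos_ge_0; unfold Rabs in Hp; destruct Rcase_abs; lra).
  assert (Hc1 : cos (al * p) <= 1) by apply COS_bound.
  assert (Hx : s / rho <= 1) by (apply (Rmult_le_reg_r rho); auto; field_simplify; lra).
  pose proof (pos_pow_bounds (s / rho) al Hal Hx) as [Ha0 Ha1].
  unfold harm_barrier_polar. rewrite pos_pow_double.
  replace (2 * al * p) with (2 * (al * p)) by ring. rewrite cos_2a_cos.
  set (a := pos_pow (s / rho) al) in *. set (c := cos (al * p)) in *.
  assert (0 <= a * c <= 1) by (split; [apply Rmult_le_pos; lra|];
    apply Rle_trans with (1 * 1); [apply Rmult_le_compat; lra|lra]).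
  split; [nra|]. split; [nra|].
  intros ->. assert (Ha : a = 1).
  { unfold a. rewrite pos_pow_pos, <- (Rpower_1_l al) by (unfold Rdiv; rewrite Rinv_r; lra).
    f_equal. field. lra. }
  rewrite Ha. nra.
Qed.

Lemma helm_factor_polar_bounds k rho s : 0 < k -> k * rho <= 1 -> 0 <= s <= rho ->
  1 / 2 <= helm_factor_polar k s <= 1.
Proof.
  intros Hk Hkr Hs. unfold helm_factor_polar.
  assert (0 <= k * s <= 1) by (split; [apply Rmult_le_pos; lra|];
    apply Rle_trans with (k * rho); [apply Rmult_le_compat_l; lra|lra]).
  assert (0 <= k ^ 2 * s ^ 2 <= 1)
    by (replace (k ^ 2 * s ^ 2) with ((k * s) ^ 2) by ring; split; [apply pow2_ge_0|]; nra).
  lra.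
Qed.

Lemma barrier_polar_pt P e al rho k M s p : fst e ^ 2 + snd e ^ 2 = 1 ->
  0 < s -> - PI < p < PI -> 0 < rho ->
  barrier P e al rho k M (polar_pt P e s p)
    = 2 * M * harm_barrier_polar al rho s p * helm_factor_polar k s /\
  helm_factor P k (polar_pt P e s p) = helm_factor_polar k s.
Proof.
  intros He Hs Hp Hr.
  assert (Hh : helm_factor P k (polar_pt P e s p) = helm_factor_polar k s).
  { unfold helm_factor, helm_factor_polar.
    rewrite <- (frame_rad_sq P e He), frame_x_polar_pt, frame_y_polar_pt, polar_rad_polar by lra.
    reflexivity. }
  split; auto. unfold barrier, harm_barrier. rewrite Hh.
  destruct (sector_polar_pt P e He al s p Hs Hp) as [A1 _].
  destruct (sector_polar_pt P e He (2 * al) s p Hs Hp) as [A2 _].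
  rewrite A1, A2. unfold harm_barrier_polar. rewrite !pos_pow_pos by (apply Rdiv_lt_0_compat; auto).
  rewrite !Rpower_div by auto. field. split; apply Rgt_not_eq, Rpower_pos.
Qed.

(** * A maximum principle in a sector *)

Section SectorMaxPrinciple.

Variables (P e : pt) (Om rho k M : R) (D : pset) (f : pt -> R).

Hypotheses (e_unit : fst e ^ 2 + snd e ^ 2 = 1) (Om_range : PI < Om < 2 * PI)
  (rho_pos : 0 < rho) (k_pos : 0 < k) (k_rho : k * rho <= 1) (M_nonneg : 0 <= M).
Hypothesis D_open : Defs.open_set D.
Hypothesis sector_in_D : forall s p, 0 < s <= rho -> Rabs p < Om / 2 -> D (polar_pt P e s p).
Hypothesis D_near_P_in_sector : forall y, D y -> dist2 y P < rho ->
  exists p, Rabs p < Om / 2 /\ y = polar_pt P e (dist2 y P) p.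
Hypothesis P_notin_D : ~ D P.
Hypothesis f_sides : forall s, 0 <= s <= rho ->
  f (polar_pt P e s (Om / 2)) = 0 /\ f (polar_pt P e s (- (Om / 2))) = 0.
Hypothesis f_continuous : forall p, closure D p -> forall eps, 0 < eps -> exists dl, 0 < dl /\
  forall q, closure D q -> dist2 p q < dl -> Rabs (f q - f p) < eps.
Hypothesis f_le_M : forall p, closure D p -> f p <= M.
Hypothesis f_C2 : forall p, D p -> ex_dx f p /\ ex_dy f p /\ ex_dx (dx f) p /\ ex_dy (dy f) p.
Hypothesis f_helmholtz : forall p, D p -> dx (dx f) p + dy (dy f) p + k ^ 2 * f p = 0.

Lemma scaled_angle_bound p : Rabs p <= Om / 2 -> Rabs (PI / Om * p) <= PI / 2.
Proof.
  intros Hp. pose proof PI_RGT_0.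
  rewrite Rabs_mult, Rabs_pos_eq by (apply Rlt_le, Rdiv_lt_0_compat; lra).
  replace (PI / 2) with (PI / Om * (Om / 2)) by (field; lra).
  apply Rmult_le_compat_l; [apply Rlt_le, Rdiv_lt_0_compat|]; lra.
Qed.

Lemma sector_closure s p : 0 <= s <= rho -> Rabs p <= Om / 2 -> closure D (polar_pt P e s p).
Proof.
  intros Hs Hp eps Heps. pose proof PI_RGT_0.
  destruct (polar_pt_continuous P e s p eps Heps) as [dl [Hdl Hc]].
  assert (Hm : 0 < Rmin rho (dl / 2)) by (apply Rmin_pos; lra).
  pose proof (Rmin_l rho (dl / 2)). pose proof (Rmin_r rho (dl / 2)).
  set (s' := Rmax s (Rmin rho (dl / 2))).
  assert (Hs' : 0 < s' <= rho /\ Rabs (s' - s) < dl).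
  { unfold s', Rmax. destruct Rle_dec; [rewrite Rabs_pos_eq|rewrite Rminus_eq_0, Rabs_R0]; lra. }
  set (eta := Rmin (1 / 2) (dl / (Om + 1))).
  assert (Heta : 0 < eta <= 1 / 2 /\ eta * (Om + 1) <= dl).
  { split; [split; [apply Rmin_pos; [lra|apply Rdiv_lt_0_compat; lra]|apply Rmin_l]|].
    apply Rle_trans with (dl / (Om + 1) * (Om + 1)); [apply Rmult_le_compat_r, Rmin_r; lra|].
    right; field; lra. }
  set (p' := p * (1 - eta)).
  assert (Hp' : Rabs p' < Om / 2 /\ Rabs (p' - p) < dl).
  { unfold p'. replace (p * (1 - eta) - p) with (- (p * eta)) by ring.
    rewrite Rabs_Ropp, !Rabs_mult, (Rabs_pos_eq eta), (Rabs_pos_eq (1 - eta)) by lra.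
    pose proof (Rabs_pos p). split; nra. }
  exists (polar_pt P e s' p'). split; [apply sector_in_D; tauto|].
  rewrite dist2_sym. apply Hc; tauto.
Qed.

Lemma D_near_P_polar q : D q -> dist2 q P < rho ->
  exists s p, 0 < s < rho /\ Rabs p < Om / 2 /\ q = polar_pt P e s p /\ s = dist2 q P.
Proof.
  intros Hq Hqd. destruct (D_near_P_in_sector q Hq Hqd) as [p [Hp Hqe]].
  assert (Hpos : 0 < dist2 q P).
  { destruct (Rle_lt_or_eq_dec 0 (dist2 q P) (dist2_pos _ _)) as [Hl|Hl]; auto.
    exfalso. apply P_notin_D. rewrite <- (dist2_eq0 q P (eq_sym Hl)). auto. }
  exists (dist2 q P), p. repeat split; auto.
Qed.

Definition barrier_quotient s p :=
  (2 * M * harm_barrier_polar (PI / Om) rho s p * helm_factor_polar k s - f (polar_pt P e s p))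
  / helm_factor_polar k s.

Lemma barrier_quotient_continuous :
  cont_on_rect 0 rho (- (Om / 2)) (Om / 2) barrier_quotient.
Proof.
  pose proof PI_RGT_0. set (al := PI / Om).
  assert (Hal : 0 < al) by (apply Rdiv_lt_0_compat; lra).
  set (Rc := cont_on_rect 0 rho (- (Om / 2)) (Om / 2)).
  assert (Hf : Rc (fun s p => f (polar_pt P e s p))).
  { intros s p [Hs Hp] eps Heps.
    assert (Hab : Rabs p <= Om / 2) by (unfold Rabs; destruct Rcase_abs; lra).
    destruct (f_continuous _ (sector_closure s p Hs Hab) eps Heps) as [dl [Hdl Hq]].
    destruct (polar_pt_continuous P e s p dl Hdl) as [d1 [Hd1 Hc]].
    exists d1. split; auto. intros s' p' [Hs' Hp'] H1 H2. apply Hq.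
    - apply sector_closure; auto. unfold Rabs; destruct Rcase_abs; lra.
    - rewrite dist2_sym. apply Hc; auto. }
  assert (Hconst : forall c, Rc (fun _ _ => c))
    by (intros c; apply cont_on_rect_fst; intros; apply continuity_pt_const; intros ? ?; auto).
  assert (Hpow : forall b, 0 < b -> Rc (fun s _ => pos_pow (s / rho) b)).
  { intros b Hb. apply cont_on_rect_fst. intros s _.
    apply (continuity_pt_comp (fun s => s / rho) (fun x => pos_pow x b));
      [reg|apply pos_pow_continuous, Hb]. }
  assert (Hcos : forall b, Rc (fun _ p => cos (b * p)))
    by (intros b; apply cont_on_rect_snd; intros; reg).
  assert (Hh : Rc (fun s _ => helm_factor_polar k s))
    by (apply cont_on_rect_fst; intros; unfold helm_factor_polar; reg).
  assert (Hhinv : Rc (fun s _ => / helm_factor_polar k s)).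
  { apply cont_on_rect_fst. intros s Hs.
    pose proof (helm_factor_polar_bounds k rho s k_pos k_rho Hs).
    apply continuity_pt_inv; [unfold helm_factor_polar; reg|lra]. }
  pose proof (cont_on_rect_plus _ _ _ _ _ _
    (cont_on_rect_mult _ _ _ _ _ _ (Hconst 2)
       (cont_on_rect_mult _ _ _ _ _ _ (Hpow al Hal) (Hcos al)))
    (cont_on_rect_mult _ _ _ _ _ _ (Hconst (-1))
       (cont_on_rect_mult _ _ _ _ _ _ (Hpow (2 * al) ltac:(lra)) (Hcos (2 * al))))) as HW.
  pose proof (cont_on_rect_mult _ _ _ _ _ _ (cont_on_rect_plus _ _ _ _ _ _
    (cont_on_rect_mult _ _ _ _ _ _ (cont_on_rect_mult _ _ _ _ _ _ (Hconst (2 * M)) HW) Hh)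
    (cont_on_rect_mult _ _ _ _ _ _ (Hconst (-1)) Hf)) Hhinv) as HG.
  eapply cont_on_rect_ext; [|exact HG]. intros s p. cbv beta.
  unfold barrier_quotient, harm_barrier_polar. fold al. unfold Rdiv. ring.
Qed.

Lemma barrier_quotient_identity s p : 0 < s <= rho -> Rabs p <= Om / 2 ->
  barrier P e (PI / Om) rho k M (polar_pt P e s p) - f (polar_pt P e s p)
  = barrier_quotient s p * helm_factor P k (polar_pt P e s p).
Proof.
  intros Hs Hp. assert (Hp' : - PI < p < PI) by (unfold Rabs in Hp; destruct Rcase_abs; lra).
  destruct (barrier_polar_pt P e (PI / Om) rho k M s p e_unit ltac:(lra) Hp' rho_pos) as [E1 E2].
  pose proof (helm_factor_polar_bounds k rho s k_pos k_rho ltac:(lra)).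
  rewrite E1, E2. unfold barrier_quotient. field. lra.
Qed.

Lemma barrier_quotient_boundary s p : in_rect 0 rho (- (Om / 2)) (Om / 2) s p ->
  s = 0 \/ Rabs p = Om / 2 \/ s = rho -> 0 <= barrier_quotient s p.
Proof.
  intros [Hs Hp] Hbd. pose proof PI_RGT_0.
  assert (Hpb : Rabs p <= Om / 2) by (unfold Rabs; destruct Rcase_abs; lra).
  destruct (harm_barrier_polar_bounds (PI / Om) rho s p ltac:(apply Rdiv_lt_0_compat; lra)
    rho_pos Hs (scaled_angle_bound p Hpb)) as [W0 [_ W1]].
  pose proof (helm_factor_polar_bounds k rho s k_pos k_rho Hs) as Hh.
  unfold barrier_quotient. apply Rdiv_le_0_compat; [|lra].
  destruct Hbd as [-> | [Hedge | ->]].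
  - destruct (f_sides 0 ltac:(lra)) as [Hf0 _]. rewrite polar_pt_0 in Hf0 |- *.
    unfold harm_barrier_polar. unfold Rdiv. rewrite Rmult_0_l, !pos_pow_0, Hf0. lra.
  - assert (Hf0 : f (polar_pt P e s p) = 0).
    { destruct (f_sides s Hs) as [Ha Hb]. unfold Rabs in Hedge; destruct Rcase_abs.
      - replace p with (- (Om / 2)) by lra. auto.
      - replace p with (Om / 2) by lra. auto. }
    rewrite Hf0.
    assert (0 <= M * harm_barrier_polar (PI / Om) rho s p) by (apply Rmult_le_pos; lra).
    nra.
  - specialize (W1 eq_refl). pose proof (f_le_M _ (sector_closure rho p Hs Hpb)).
    assert (M <= M * harm_barrier_polar (PI / Om) rho rho p) by nra.
    nra.
Qed.

Definition barrier_excess m q :=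
  barrier P e (PI / Om) rho k M q - f q - m * helm_factor P k q.

Lemma barrier_excess_local_min s0 p0 : 0 < s0 < rho -> Rabs p0 < Om / 2 ->
  (forall s p, in_rect 0 rho (- (Om / 2)) (Om / 2) s p ->
     barrier_quotient s0 p0 <= barrier_quotient s p) ->
  exists dl, 0 < dl /\ forall q, dist2 (polar_pt P e s0 p0) q < dl -> D q /\ off_cut P e q /\
    barrier_excess (barrier_quotient s0 p0) (polar_pt P e s0 p0)
    <= barrier_excess (barrier_quotient s0 p0) q.
Proof.
  intros Hs0 Hp0 Hmin. set (m := barrier_quotient s0 p0). set (q0 := polar_pt P e s0 p0).
  assert (Dq0 : D q0) by (apply sector_in_D; auto; lra).
  assert (Hq0 : barrier_excess m q0 = 0)
    by (unfold barrier_excess, q0; rewrite barrier_quotient_identity by lra; fold m; ring).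
  destruct (D_open q0 Dq0) as [e0 [He0 Hball]].
  exists (Rmin e0 (rho - s0)). split; [apply Rmin_pos; lra|]. intros q Hq.
  assert (Dq : D q) by (apply Hball; eapply Rlt_le_trans; [exact Hq|apply Rmin_l]).
  assert (Hqd : dist2 q P < rho).
  { assert (Hq0P : dist2 q0 P = s0) by (apply dist2_polar_pt; auto; lra).
    pose proof (dist2_triang q q0 P) as Htri. rewrite (dist2_sym q q0), Hq0P in Htri.
    assert (Rmin e0 (rho - s0) <= rho - s0) by apply Rmin_r. lra. }
  destruct (D_near_P_polar q Dq Hqd) as [s [p [Hs [Hp [-> _]]]]].
  assert (Hp' : - PI < p < PI) by (unfold Rabs in Hp; destruct Rcase_abs; lra).
  split; [exact Dq|]. split; [apply off_cut_polar_pt; auto; lra|]. rewrite Hq0.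
  unfold barrier_excess. rewrite barrier_quotient_identity by lra.
  destruct (barrier_polar_pt P e (PI / Om) rho k M s p e_unit ltac:(lra) Hp' rho_pos) as [_ ->].
  pose proof (helm_factor_polar_bounds k rho s k_pos k_rho ltac:(lra)).
  assert (m <= barrier_quotient s p)
    by (apply Hmin; split; [lra|unfold Rabs in Hp; destruct Rcase_abs; lra]).
  nra.
Qed.

Lemma barrier_excess_laplacian_nonneg m q0 dl : 0 < dl ->
  (forall q, dist2 q0 q < dl ->
     D q /\ off_cut P e q /\ barrier_excess m q0 <= barrier_excess m q) ->
  0 <= barrier_xx P e (PI / Om) rho k M q0 + barrier_yy P e (PI / Om) rho k M q0
       - (dx (dx f) q0 + dy (dy f) q0) + 2 * m * k ^ 2.
Proof.
  intros Hdl Hloc.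
  destruct (Hloc q0 ltac:(rewrite dist2_refl; lra)) as [Dq0 [Hcut0 _]].
  destruct (f_C2 q0 Dq0) as [_ [_ [Exx Eyy]]].
  assert (0 <= barrier_xx P e (PI / Om) rho k M q0 - dx (dx f) q0 - m * - k ^ 2).
  { apply (dxx_nonneg_at_local_min (barrier_excess m)
      (fun q => barrier_x P e (PI / Om) rho k M q - dx f q - m * helm_factor_x P k q) _ q0 dl Hdl).
    - intros q Hq. destruct (Hloc q Hq) as [Dq [Hcut Hle]]. split; [exact Hle|].
      apply is_derive_Rminus; [apply is_derive_Rminus|apply is_derive_scal].
      + apply is_derive_barrier_x, Hcut.
      + apply Derive_correct, (f_C2 q Dq).
      + apply is_derive_helm_factor_x.
    - apply is_derive_Rminus; [apply is_derive_Rminus|apply is_derive_scal].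
      + apply is_derive_barrier_xx, Hcut0.
      + apply Derive_correct, Exx.
      + apply is_derive_helm_factor_xx. }
  assert (0 <= barrier_yy P e (PI / Om) rho k M q0 - dy (dy f) q0 - m * - k ^ 2).
  { apply (dyy_nonneg_at_local_min (barrier_excess m)
      (fun q => barrier_y P e (PI / Om) rho k M q - dy f q - m * helm_factor_y P k q) _ q0 dl Hdl).
    - intros q Hq. destruct (Hloc q Hq) as [Dq [Hcut Hle]]. split; [exact Hle|].
      apply is_derive_Rminus; [apply is_derive_Rminus|apply is_derive_scal].
      + apply is_derive_barrier_y, Hcut.
      + apply Derive_correct, (f_C2 q Dq).
      + apply is_derive_helm_factor_y.
    - apply is_derive_Rminus; [apply is_derive_Rminus|apply is_derive_scal].
      + apply is_derive_barrier_yy, Hcut0.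
      + apply Derive_correct, Eyy.
      + apply is_derive_helm_factor_yy. }
  lra.
Qed.

(* At an interior minimum [m < 0] the excess [Phi - f - m h] has a local minimum [0], but
   [(Delta + k^2) (Phi - f - m h) <= - m k^2 (2 - h) < 0] there. *)
Lemma barrier_quotient_interior_min s0 p0 : 0 < s0 < rho -> Rabs p0 < Om / 2 ->
  (forall s p, in_rect 0 rho (- (Om / 2)) (Om / 2) s p ->
     barrier_quotient s0 p0 <= barrier_quotient s p) ->
  0 <= barrier_quotient s0 p0.
Proof.
  intros Hs0 Hp0 Hmin. apply Rnot_lt_le. intros Hm. pose proof PI_RGT_0.
  assert (Hp0' : - PI < p0 < PI) by (unfold Rabs in Hp0; destruct Rcase_abs; lra).
  destruct (barrier_excess_local_min s0 p0 Hs0 Hp0 Hmin) as [dl [Hdl Hloc]].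
  set (m := barrier_quotient s0 p0) in *. set (q0 := polar_pt P e s0 p0) in *.
  pose proof (barrier_excess_laplacian_nonneg m q0 dl Hdl Hloc) as Hlap.
  assert (Hsuper : barrier_xx P e (PI / Om) rho k M q0 + barrier_yy P e (PI / Om) rho k M q0
                   + k ^ 2 * barrier P e (PI / Om) rho k M q0 <= 0).
  { apply barrier_supersolution; auto.
    - apply Rdiv_lt_0_compat; lra.
    - apply off_cut_polar_pt; auto; lra.
    - unfold q0. rewrite frame_x_polar_pt, frame_y_polar_pt, polar_ang_polar by (auto; lra).
      pose proof (scaled_angle_bound p0 ltac:(lra)) as Hb.
      apply cos_ge_0; unfold Rabs in Hb; destruct Rcase_abs; lra.
    - unfold q0. rewrite frame_x_polar_pt, frame_y_polar_pt, polar_rad_polar by (auto; lra).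
      lra. }
  pose proof (f_helmholtz q0 (proj1 (Hloc q0 ltac:(rewrite dist2_refl; lra)))).
  pose proof (barrier_quotient_identity s0 p0 ltac:(lra) ltac:(lra)) as Hid. fold m q0 in Hid.
  destruct (barrier_polar_pt P e (PI / Om) rho k M s0 p0 e_unit ltac:(lra) Hp0' rho_pos)
    as [_ Hh0]. fold q0 in Hh0. rewrite Hh0 in Hid.
  pose proof (helm_factor_polar_bounds k rho s0 k_pos k_rho ltac:(lra)).
  assert (m * k ^ 2 * (2 - helm_factor_polar k s0) < 0)
    by (apply Rmult_neg_pos; [apply Rmult_neg_pos; [|apply pow_lt]|]; lra).
  nra.
Qed.

Lemma barrier_quotient_nonneg s p : in_rect 0 rho (- (Om / 2)) (Om / 2) s p ->
  0 <= barrier_quotient s p.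
Proof.
  intros Hr. destruct (cont_on_rect_min 0 rho (- (Om / 2)) (Om / 2) barrier_quotient
    ltac:(lra) ltac:(lra) barrier_quotient_continuous) as [s0 [p0 [[Hs0 Hp0] Hmin]]].
  apply Rle_trans with (barrier_quotient s0 p0); [|apply Hmin, Hr].
  destruct (Req_dec s0 0) as [Hc|Hc]; [apply barrier_quotient_boundary; auto; split; auto|].
  destruct (Req_dec (Rabs p0) (Om / 2)) as [He|He];
    [apply barrier_quotient_boundary; auto; split; auto|].
  destruct (Req_dec s0 rho) as [Ha|Ha]; [apply barrier_quotient_boundary; auto; split; auto|].
  apply barrier_quotient_interior_min; auto; [lra|].
  unfold Rabs in *; destruct Rcase_abs; lra.
Qed.

Lemma sector_bound y : D y -> dist2 y P < rho ->
  f y <= 6 * M * Rpower (dist2 y P / rho) (PI / Om).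
Proof.
  intros Hy Hyd. pose proof PI_RGT_0.
  destruct (D_near_P_polar y Hy Hyd) as [s [p [Hs [Hp [-> <-]]]]].
  assert (Hpb : Rabs p <= Om / 2) by lra.
  assert (Hr : in_rect 0 rho (- (Om / 2)) (Om / 2) s p)
    by (split; [lra|unfold Rabs in Hp; destruct Rcase_abs; lra]).
  pose proof (barrier_quotient_nonneg s p Hr) as HG.
  pose proof (barrier_quotient_identity s p ltac:(lra) Hpb) as E.
  destruct (barrier_polar_pt P e (PI / Om) rho k M s p e_unit ltac:(lra)
    ltac:(unfold Rabs in Hp; destruct Rcase_abs; lra) rho_pos) as [E1 E2].
  rewrite E1, E2 in E.
  destruct (harm_barrier_polar_bounds (PI / Om) rho s p ltac:(apply Rdiv_lt_0_compat; lra)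
    rho_pos ltac:(lra) (scaled_angle_bound p Hpb)) as [W0 [W1 _]].
  rewrite pos_pow_pos in W1 by (apply Rdiv_lt_0_compat; lra).
  pose proof (helm_factor_polar_bounds k rho s k_pos k_rho ltac:(lra)).
  assert (0 <= barrier_quotient s p * helm_factor_polar k s) by (apply Rmult_le_pos; lra).
  assert (2 * M * harm_barrier_polar (PI / Om) rho s p * helm_factor_polar k s
          <= 2 * M * (3 * Rpower (s / rho) (PI / Om)) * 1)
    by (apply Rmult_le_compat; [apply Rmult_le_pos| |apply Rmult_le_compat_l|]; lra).
  lra.
Qed.

End SectorMaxPrinciple.

(** * A convex polygon near a corner *)

Lemma mod_succ N i : (i < N)%nat ->
  ((i + 1) mod N = if Nat.eqb (i + 1) N then 0 else i + 1)%nat.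
Proof.
  intros H. destruct (Nat.eqb_spec (i + 1) N) as [E|E].
  - rewrite E. apply Nat.Div0.mod_same.
  - apply Nat.mod_small. lia.
Qed.

Lemma mod_pred N j : (j < N)%nat ->
  ((j + N - 1) mod N = if Nat.eqb j 0 then N - 1 else j - 1)%nat.
Proof.
  intros H. destruct (Nat.eqb_spec j 0) as [E|E].
  - subst. replace (0 + N - 1)%nat with (N - 1)%nat by lia. apply Nat.mod_small. lia.
  - replace (j + N - 1)%nat with ((j - 1) + 1 * N)%nat by lia.
    rewrite Nat.Div0.mod_add. apply Nat.mod_small. lia.
Qed.

Lemma neighbour_indices N j : (3 <= N)%nat -> (j < N)%nat ->
  let jm := ((j + N - 1) mod N)%nat in
  (jm < N)%nat /\ jm <> j /\ jm <> ((j + 1) mod N)%nat /\ ((jm + 1) mod N)%nat = j /\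
  (forall i, (i < N)%nat -> i <> j -> i <> jm -> j <> i /\ j <> ((i + 1) mod N)%nat).
Proof.
  intros HN Hj jm. unfold jm. rewrite (mod_pred N j Hj), (mod_succ N j Hj).
  destruct (Nat.eqb_spec j 0) as [E|E]; destruct (Nat.eqb_spec (j + 1) N) as [E2|E2]; try lia;
    [subst; rewrite mod_succ by lia; destruct (Nat.eqb_spec (N - 1 + 1) N); [|lia]
    |rewrite mod_succ by lia; destruct (Nat.eqb_spec (j - 1 + 1) N); [lia|]
    |rewrite mod_succ by lia; destruct (Nat.eqb_spec (j - 1 + 1) N); [lia|]];
    repeat split; try lia;
    match goal with |- context [((?a + 1) mod N)%nat] =>
      rewrite (mod_succ N a) by lia; destruct (Nat.eqb_spec (a + 1) N); lia end.
Qed.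

Lemma vtx_lt N P i : (i < N)%nat -> vtx N P i = P i.
Proof. intros. unfold vtx. rewrite Nat.mod_small; auto. Qed.

Lemma finite_min_radius (n : nat) (Q : nat -> R -> Prop) :
  (forall i, (i < n)%nat -> exists r, 0 < r /\ Q i r) ->
  (forall i r r', Q i r -> 0 < r' <= r -> Q i r') ->
  exists r, 0 < r /\ forall i, (i < n)%nat -> Q i r.
Proof.
  intros H Hm. induction n.
  - exists 1. split; [lra|]. intros; lia.
  - destruct IHn as [r [Hr Hq]]. { intros i Hi. apply H. lia. }
    destruct (H n ltac:(lia)) as [r' [Hr' Hq']].
    exists (Rmin r r'). split; [apply Rmin_pos; auto|].
    intros i Hi. destruct (Nat.eq_dec i n) as [->|Hne].
    + apply (Hm n r'); auto. split; [apply Rmin_pos; auto|apply Rmin_r].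
    + apply (Hm i r); [apply Hq; lia|]. split; [apply Rmin_pos; auto|apply Rmin_l].
Qed.

Definition rotate (e : pt) (p : R) : pt :=
  (fst e * cos p - snd e * sin p, snd e * cos p + fst e * sin p).

Lemma rotate_rotate e a b : rotate (rotate e a) b = rotate e (a + b).
Proof.
  unfold rotate; simpl. rewrite cos_plus, sin_plus. apply injective_projections; simpl; ring.
Qed.

Lemma rotate_0 e : rotate e 0 = e.
Proof. unfold rotate. rewrite cos_0, sin_0. apply injective_projections; simpl; ring. Qed.

Lemma rotate_norm e p : fst (rotate e p) ^ 2 + snd (rotate e p) ^ 2 = fst e ^ 2 + snd e ^ 2.
Proof.
  unfold rotate; simpl. pose proof (sin2_cos2 p) as H. unfold Rsqr in H.
  transitivity ((fst e ^ 2 + snd e ^ 2) * (sin p * sin p + cos p * cos p)); [ring|].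
  rewrite H. ring.
Qed.

Lemma cross_rotate e a b : fst e ^ 2 + snd e ^ 2 = 1 ->
  cross2 (rotate e a) (rotate e b) = sin (b - a).
Proof.
  intros He. unfold cross2, rotate; simpl. rewrite sin_minus.
  rewrite <- (Rmult_1_r (sin b * cos a - cos b * sin a)), <- He. ring.
Qed.

Lemma polar_pt_sub P e s p :
  vsub (polar_pt P e s p) P = (s * fst (rotate e p), s * snd (rotate e p)).
Proof. unfold vsub, polar_pt, rotate; simpl. apply injective_projections; simpl; ring. Qed.

Definition unit_vec (a : pt) : pt := (fst a / norm2 a, snd a / norm2 a).
Definition exterior_angle_of (a b : pt) := 2 * PI - acos (dot2 a b / (norm2 a * norm2 b)).
Definition bisector (a b : pt) : pt := rotate (unit_vec b) (- (exterior_angle_of a b / 2)).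

Lemma norm2_sq a : norm2 a ^ 2 = fst a ^ 2 + snd a ^ 2.
Proof. unfold norm2. rewrite pow2_sqrt; [auto|]. nra. Qed.

Lemma norm2_pos_of_cross a b : 0 < cross2 b a -> 0 < norm2 a /\ 0 < norm2 b.
Proof.
  intros H. unfold norm2, cross2 in *.
  split; apply sqrt_lt_R0; apply Rnot_le_lt; intro Hle;
    [assert (fst a = 0 /\ snd a = 0) as [E1 E2] by (split; nra)
    |assert (fst b = 0 /\ snd b = 0) as [E1 E2] by (split; nra)];
    rewrite E1, E2 in H; lra.
Qed.

Lemma unit_vec_unit a : 0 < norm2 a -> fst (unit_vec a) ^ 2 + snd (unit_vec a) ^ 2 = 1.
Proof.
  intros H. pose proof (norm2_sq a) as Hsq. unfold unit_vec; cbn [fst snd].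
  replace ((fst a / norm2 a) ^ 2 + (snd a / norm2 a) ^ 2)
    with ((fst a ^ 2 + snd a ^ 2) / norm2 a ^ 2)
    by (field; lra).
  rewrite <- Hsq. field. lra.
Qed.

Lemma bisector_frame a b : 0 < cross2 b a ->
  fst (bisector a b) ^ 2 + snd (bisector a b) ^ 2 = 1 /\ PI < exterior_angle_of a b < 2 * PI /\
  rotate (bisector a b) (exterior_angle_of a b / 2) = unit_vec b /\
  rotate (bisector a b) (- (exterior_angle_of a b / 2)) = unit_vec a.
Proof.
  intros H. destruct (norm2_pos_of_cross a b H) as [Ha Hb].
  pose proof (unit_vec_unit a Ha) as Hua. pose proof (unit_vec_unit b Hb) as Hub.
  set (t := dot2 a b / (norm2 a * norm2 b)).
  set (c := cross2 (unit_vec b) (unit_vec a)).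
  assert (Ht : t = fst (unit_vec b) * fst (unit_vec a) + snd (unit_vec b) * snd (unit_vec a))
    by (unfold t, dot2, unit_vec; simpl; field; lra).
  assert (Hc : 0 < c).
  { unfold c. replace (cross2 (unit_vec b) (unit_vec a)) with (cross2 b a / (norm2 a * norm2 b))
      by (unfold cross2, unit_vec; simpl; field; lra).
    apply Rdiv_lt_0_compat; [lra|]. apply Rmult_lt_0_compat; lra. }
  assert (Htc : t ^ 2 + c ^ 2 = 1).
  { rewrite Ht. unfold c, cross2.
    transitivity ((fst (unit_vec b) ^ 2 + snd (unit_vec b) ^ 2)
                  * (fst (unit_vec a) ^ 2 + snd (unit_vec a) ^ 2)); [ring|].
    rewrite Hua, Hub. ring. }
  assert (Ht1 : -1 < t < 1) by (split; nra).
  set (gam := acos t).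
  assert (Hg : 0 < gam < PI) by (apply acos_bound_lt; auto).
  assert (Hcg : cos gam = t) by (apply cos_acos; lra).
  assert (Hsg : sin gam = c).
  { unfold gam. rewrite sin_acos by lra. replace (1 - t²) with (c ^ 2) by (unfold Rsqr; lra).
    apply sqrt_pow2. lra. }
  assert (HOm : exterior_angle_of a b = 2 * PI - gam) by reflexivity.
  unfold bisector. rewrite HOm, !rotate_rotate.
  split; [rewrite rotate_norm; exact Hub|]. split; [lra|]. split.
  - replace (- ((2 * PI - gam) / 2) + (2 * PI - gam) / 2) with 0 by ring. apply rotate_0.
  - replace (- ((2 * PI - gam) / 2) + - ((2 * PI - gam) / 2)) with (gam + - (2 * PI)) by field.
    unfold rotate. rewrite cos_plus, sin_plus, cos_neg, sin_neg, cos_2PI, sin_2PI, Hcg, Hsg.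
    unfold c, cross2. rewrite Ht.
    apply injective_projections; cbn [fst snd].
    + transitivity (fst (unit_vec a) * (fst (unit_vec b) ^ 2 + snd (unit_vec b) ^ 2));
        [|rewrite Hub]; ring.
    + transitivity (snd (unit_vec a) * (fst (unit_vec b) ^ 2 + snd (unit_vec b) ^ 2));
        [|rewrite Hub]; ring.
Qed.

(* A direction at angle [p] from the bisector lies in the closed polygon angle exactly when
   [Om/2 <= |p|]. *)
Lemma sin_half_angle_signs Om p : PI < Om < 2 * PI -> - PI <= p <= PI ->
  (0 <= sin (p - Om / 2) /\ sin (p + Om / 2) <= 0 <-> Om / 2 <= Rabs p).
Proof.
  intros HOm Hp. pose proof PI_RGT_0. split.
  - intros [H1 H2]. apply Rnot_lt_le. intros Hlt. unfold Rabs in Hlt; destruct Rcase_abs.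
    + assert (0 < sin (p + Om / 2)) by (apply sin_gt_0; lra). lra.
    + assert (sin (p - Om / 2) < 0) by (apply sin_lt_0_var; lra). lra.
  - intros Hge. unfold Rabs in Hge; destruct Rcase_abs.
    + assert (sin (Om / 2 - p) <= 0) by (apply sin_le_0; lra).
      assert (0 <= sin (- p - Om / 2)) by (apply sin_ge_0; lra).
      replace (p - Om / 2) with (- (Om / 2 - p)) by ring.
      replace (p + Om / 2) with (- (- p - Om / 2)) by ring.
      rewrite !sin_neg. lra.
    + split; [apply sin_ge_0|apply sin_le_0]; lra.
Qed.

Definition side_cross N P i (y : pt) :=
  cross2 (vsub (vtx N P (i + 1)) (vtx N P i)) (vsub y (vtx N P i)).

Lemma cross2_sub_lipschitz (w Z y q : pt) :
  Rabs (cross2 w (vsub q Z) - cross2 w (vsub y Z)) <= (Rabs (fst w) + Rabs (snd w)) * dist2 y q.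
Proof.
  unfold cross2, vsub; cbn [fst snd].
  replace (fst w * (snd q - snd Z) - snd w * (fst q - fst Z)
           - (fst w * (snd y - snd Z) - snd w * (fst y - fst Z)))
    with (fst w * (snd q - snd y) - snd w * (fst q - fst y)) by ring.
  assert (H1 : Rabs (fst q - fst y) <= dist2 y q)
    by (rewrite Rabs_minus_sym; apply Rabs_le_polar_rad).
  assert (H2 : Rabs (snd q - snd y) <= dist2 y q)
    by (rewrite Rabs_minus_sym; unfold dist2; rewrite Rplus_comm; apply Rabs_le_polar_rad).
  eapply Rle_trans; [apply Rabs_triang|]. rewrite Rabs_Ropp, !Rabs_mult.
  pose proof (Rabs_pos (fst w)). pose proof (Rabs_pos (snd w)). nra.
Qed.

Lemma side_cross_continuous N P i y eps : 0 < eps -> exists r, 0 < r /\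
  forall q, dist2 y q < r -> Rabs (side_cross N P i q - side_cross N P i y) < eps.
Proof.
  intros Heps. set (w := vsub (vtx N P (i + 1)) (vtx N P i)).
  set (K := Rabs (fst w) + Rabs (snd w) + 1).
  pose proof (Rabs_pos (fst w)). pose proof (Rabs_pos (snd w)).
  assert (HK : 0 < K) by (unfold K; lra).
  exists (eps / K). split; [apply Rdiv_lt_0_compat; lra|]. intros q Hq.
  pose proof (cross2_sub_lipschitz w (vtx N P i) y q) as L.
  assert (K * dist2 y q < eps).
  { apply (Rmult_lt_reg_r (/ K)); [apply Rinv_0_lt_compat; lra|].
    replace (K * dist2 y q * / K) with (dist2 y q) by (field; lra). exact Hq. }
  pose proof (dist2_pos y q).
  assert ((Rabs (fst w) + Rabs (snd w)) * dist2 y q <= K * dist2 y q)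
    by (apply Rmult_le_compat_r; unfold K; lra).
  unfold side_cross. fold w. lra.
Qed.

Lemma closure_polygon_side N P y : closure (polygon_interior N P) y ->
  forall i, (i < N)%nat -> 0 <= side_cross N P i y.
Proof.
  intros Hc i Hi. apply Rnot_lt_le. intro Hneg.
  destruct (side_cross_continuous N P i y (- side_cross N P i y)) as [r [Hr Hnear]]; [lra|].
  destruct (Hc r Hr) as [q [Hq Hd]]. specialize (Hnear q Hd). specialize (Hq i Hi).
  unfold Rabs in Hnear; destruct Rcase_abs; fold (side_cross N P i q) in Hq; lra.
Qed.

Definition corner_radius N P rg := forall j i, (j < N)%nat -> (i < N)%nat -> i <> j ->
  i <> ((j + N - 1) mod N)%nat -> forall q, dist2 q (P j) < rg -> 0 < side_cross N P i q.

(* Convexity: each corner lies strictly inside the half-planes of the sides not meeting it. *)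
Lemma corner_radius_exists N P : convex_polygon N P -> exists rg, 0 < rg /\ corner_radius N P rg.
Proof.
  intros [HN HP].
  set (Q := fun j r => forall i, (i < N)%nat -> i <> j -> i <> ((j + N - 1) mod N)%nat ->
    forall q, dist2 q (P j) < r -> 0 < side_cross N P i q).
  assert (HQ : forall j, (j < N)%nat -> exists r, 0 < r /\ Q j r).
  { intros j Hj.
    set (Qj := fun i r => i <> j -> i <> ((j + N - 1) mod N)%nat ->
      forall q, dist2 q (P j) < r -> 0 < side_cross N P i q).
    assert (HQj : forall i, (i < N)%nat -> exists r, 0 < r /\ Qj i r).
    { intros i Hi. destruct (Nat.eq_dec i j) as [E|E];
        [exists 1; split; [lra|]; intros ?; contradiction|].
      destruct (Nat.eq_dec i ((j + N - 1) mod N)) as [E2|E2];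
        [exists 1; split; [lra|]; intros ? ?; contradiction|].
      destruct (neighbour_indices N j HN Hj) as [_ [_ [_ [_ Hn]]]].
      destruct (Hn i Hi E E2) as [F1 F2].
      pose proof (HP i j Hi Hj F1 F2) as Hpos. fold (side_cross N P i (P j)) in Hpos.
      destruct (side_cross_continuous N P i (P j) (side_cross N P i (P j)) Hpos) as [r [Hr Hn']].
      exists r. split; auto. intros _ _ q Hq. rewrite dist2_sym in Hq. specialize (Hn' q Hq).
      unfold Rabs in Hn'; destruct Rcase_abs; lra. }
    assert (HQjmono : forall i r r', Qj i r -> 0 < r' <= r -> Qj i r')
      by (intros i r r' Hq' Hr' H1 H2 q Hq; apply Hq'; auto; lra).
    destruct (finite_min_radius N Qj HQj HQjmono) as [r [Hr Hall]].
    exists r. split; auto. }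
  assert (HQmono : forall j r r', Q j r -> 0 < r' <= r -> Q j r')
    by (intros j r r' Hq Hr i Hi H1 H2 q Hd; apply Hq; auto; lra).
  destruct (finite_min_radius N Q HQ HQmono) as [rg [Hrg H]].
  exists rg. split; auto. intros j i Hj Hi. apply H; auto.
Qed.

Definition prev_edge N P j := vsub (vtx N P (j + N - 1)) (P j).
Definition next_edge N P j := vsub (vtx N P (j + 1)) (P j).

Section Corner.

Variables (N : nat) (P : nat -> pt) (j : nat) (rg : R).
Hypotheses (convex : convex_polygon N P) (j_lt : (j < N)%nat).
Hypotheses (rg_pos : 0 < rg) (rg_corner : corner_radius N P rg).

Local Notation Om := (exterior_angle N P j).
Local Notation e := (bisector (prev_edge N P j) (next_edge N P j)).

Lemma side_cross_next z : side_cross N P j z = cross2 (next_edge N P j) (vsub z (P j)).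
Proof. unfold side_cross, next_edge. rewrite (vtx_lt N P j j_lt). reflexivity. Qed.

Lemma side_cross_prev z :
  side_cross N P ((j + N - 1) mod N) z = - cross2 (prev_edge N P j) (vsub z (P j)).
Proof.
  destruct (neighbour_indices N j (proj1 convex) j_lt) as [_ [_ [_ [H4 _]]]].
  unfold side_cross, prev_edge. unfold vtx at 1. rewrite H4.
  replace (vtx N P ((j + N - 1) mod N)) with (vtx N P (j + N - 1))
    by (unfold vtx; rewrite Nat.Div0.mod_mod; auto).
  unfold cross2, vsub; simpl. ring.
Qed.

Lemma corner_convex : 0 < cross2 (next_edge N P j) (prev_edge N P j).
Proof.
  destruct convex as [HN HP]. destruct (neighbour_indices N j HN j_lt) as [H1 [H2 [H3 _]]].
  pose proof (HP j _ j_lt H1 H2 H3) as H. unfold next_edge, prev_edge.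
  rewrite <- (vtx_lt N P j j_lt). exact H.
Qed.

Lemma closure_polygon_corner y : closure (polygon_interior N P) y ->
  0 <= cross2 (next_edge N P j) (vsub y (P j)) /\ cross2 (prev_edge N P j) (vsub y (P j)) <= 0.
Proof.
  intros Hc. destruct (neighbour_indices N j (proj1 convex) j_lt) as [H1 _].
  pose proof (closure_polygon_side N P y Hc j j_lt) as A.
  pose proof (closure_polygon_side N P y Hc _ H1) as B.
  rewrite side_cross_next in A. rewrite side_cross_prev in B. split; lra.
Qed.

Lemma closure_polygon_of_corner y : dist2 y (P j) < rg ->
  0 <= cross2 (next_edge N P j) (vsub y (P j)) -> cross2 (prev_edge N P j) (vsub y (P j)) <= 0 ->
  closure (polygon_interior N P) y.
Proof.
  intros Hy H1 H2 eps Heps. pose proof corner_convex as Hab.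
  set (a := prev_edge N P j) in *. set (b := next_edge N P j) in *.
  (* push [y] slightly along [a + b], into the open angle *)
  set (w1 := fst a + fst b). set (w2 := snd a + snd b).
  set (K := 2 * (Rabs w1 + Rabs w2 + 1)).
  assert (HK : 0 < K) by (unfold K; pose proof (Rabs_pos w1); pose proof (Rabs_pos w2); lra).
  set (mu := Rmin eps (rg - dist2 y (P j))).
  assert (Hmu : 0 < mu) by (apply Rmin_pos; lra).
  set (eta := mu / K).
  assert (Heta : 0 < eta) by (apply Rdiv_lt_0_compat; auto).
  set (z := (fst y + eta * w1, snd y + eta * w2)).
  assert (Hyz : dist2 y z < mu).
  { eapply Rle_lt_trans; [apply dist2_le_sum|]. unfold z; simpl.
    replace (fst y - (fst y + eta * w1)) with (- (eta * w1)) by ring.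
    replace (snd y - (snd y + eta * w2)) with (- (eta * w2)) by ring.
    rewrite !Rabs_Ropp, !Rabs_mult, (Rabs_pos_eq eta) by lra.
    assert (eta * K = mu) by (unfold eta; field; lra). unfold K in H.
    pose proof (Rabs_pos w1); pose proof (Rabs_pos w2). nra. }
  exists z. split.
  - intros i Hi. change (0 < side_cross N P i z). destruct (Nat.eq_dec i j) as [->|E1].
    + rewrite side_cross_next. fold b.
      replace (cross2 b (vsub z (P j))) with (cross2 b (vsub y (P j)) + eta * cross2 b a)
        by (unfold cross2, vsub, z, w1, w2; simpl; ring).
      assert (0 < eta * cross2 b a) by (apply Rmult_lt_0_compat; auto). lra.
    + destruct (Nat.eq_dec i ((j + N - 1) mod N)) as [->|E2].
      * rewrite side_cross_prev. fold a.
        replace (cross2 a (vsub z (P j))) with (cross2 a (vsub y (P j)) - eta * cross2 b a)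
          by (unfold cross2, vsub, z, w1, w2; simpl; ring).
        assert (0 < eta * cross2 b a) by (apply Rmult_lt_0_compat; auto). lra.
      * apply (rg_corner j i j_lt Hi E1 E2).
        pose proof (dist2_triang z y (P j)). rewrite dist2_sym in Hyz.
        assert (mu <= rg - dist2 y (P j)) by apply Rmin_r. lra.
  - assert (mu <= eps) by apply Rmin_l. lra.
Qed.

Lemma corner_in_closure : closure (polygon_interior N P) (P j).
Proof.
  apply closure_polygon_of_corner; rewrite ?dist2_refl; auto; unfold cross2, vsub; simpl; lra.
Qed.

Lemma exterior_angle_corner : Om = exterior_angle_of (prev_edge N P j) (next_edge N P j).
Proof.
  unfold exterior_angle, exterior_angle_of, prev_edge, next_edge.
  rewrite (vtx_lt N P j j_lt). reflexivity.
Qed.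

Lemma corner_frame : fst e ^ 2 + snd e ^ 2 = 1 /\ PI < Om < 2 * PI.
Proof.
  destruct (bisector_frame _ _ corner_convex) as [He [HOm _]].
  rewrite exterior_angle_corner. auto.
Qed.

Lemma cross_edges_polar s p :
  cross2 (next_edge N P j) (vsub (polar_pt (P j) e s p) (P j)) =
    norm2 (next_edge N P j) * s * sin (p - Om / 2) /\
  cross2 (prev_edge N P j) (vsub (polar_pt (P j) e s p) (P j)) =
    norm2 (prev_edge N P j) * s * sin (p + Om / 2).
Proof.
  destruct (bisector_frame _ _ corner_convex) as [He [_ [Rb Ra]]].
  destruct (norm2_pos_of_cross _ _ corner_convex) as [Ha Hb].
  rewrite <- exterior_angle_corner in Rb, Ra.
  rewrite polar_pt_sub. split.
  - rewrite <- (cross_rotate _ (Om / 2) p He), Rb.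
    unfold cross2, unit_vec; cbn [fst snd]. field. lra.
  - replace (p + Om / 2) with (p - - (Om / 2)) by ring.
    rewrite <- (cross_rotate _ (- (Om / 2)) p He), Ra.
    unfold cross2, unit_vec; cbn [fst snd]. field. lra.
Qed.

Lemma closure_polygon_polar s p : 0 < s < rg -> - PI <= p <= PI ->
  (closure (polygon_interior N P) (polar_pt (P j) e s p) <-> Om / 2 <= Rabs p).
Proof.
  intros Hs Hp. destruct corner_frame as [He HOm].
  destruct (norm2_pos_of_cross _ _ corner_convex) as [Ha Hb].
  destruct (cross_edges_polar s p) as [E1 E2].
  rewrite <- (sin_half_angle_signs Om p HOm Hp). split.
  - intros Hc. destruct (closure_polygon_corner _ Hc) as [C1 C2].
    rewrite E1 in C1. rewrite E2 in C2.
    split; [apply (Rmult_le_reg_l (norm2 (next_edge N P j) * s))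
           |apply (Rmult_le_reg_l (norm2 (prev_edge N P j) * s))];
      try (apply Rmult_lt_0_compat; lra); lra.
  - intros [S1 S2]. apply closure_polygon_of_corner.
    + rewrite dist2_polar_pt; auto; lra.
    + rewrite E1. apply Rmult_le_pos; [apply Rmult_le_pos|]; lra.
    + rewrite E2. assert (0 <= norm2 (prev_edge N P j) * s) by (apply Rmult_le_pos; lra). nra.
Qed.

End Corner.

(** * The exterior domain near a corner *)

Lemma not_closure_open (S : pset) p : ~ closure S p ->
  exists eps, 0 < eps /\ forall q, dist2 p q < eps -> ~ closure S q.
Proof.
  intros H. unfold closure in H. apply not_all_ex_not in H. destruct H as [eps H].
  apply imply_to_and in H. destruct H as [He H].
  exists (eps / 2). split; [lra|]. intros q Hq Hc.
  destruct (Hc (eps / 2) ltac:(lra)) as [r [Hr Hqr]].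
  apply H. exists r. split; auto. pose proof (dist2_triang p q r). lra.
Qed.

Lemma exterior_domain_open Omega omega : Defs.open_set (exterior_domain Omega omega).
Proof.
  intros p [H1 H2]. destruct (not_closure_open _ _ H1) as [e1 [He1 A1]].
  destruct (not_closure_open _ _ H2) as [e2 [He2 A2]].
  exists (Rmin e1 e2). split; [apply Rmin_pos; auto|]. intros q Hq. split.
  - apply A1. eapply Rlt_le_trans; [exact Hq|apply Rmin_l].
  - apply A2. eapply Rlt_le_trans; [exact Hq|apply Rmin_r].
Qed.

Lemma closure_self (S : pset) p : S p -> closure S p.
Proof. intros Hp eps Heps. exists p. rewrite dist2_refl. auto. Qed.

Section CornerDomain.

Variables (N : nat) (P : nat -> pt) (omega : pset) (j : nat) (rg dl rho : R).
Hypotheses (convex : convex_polygon N P) (j_lt : (j < N)%nat).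
Hypotheses (rg_pos : 0 < rg) (rg_corner : corner_radius N P rg).
Hypothesis obstacle_far : forall x z, polygon_interior N P x -> omega z -> dl <= dist2 x z.
Hypotheses (rho_pos : 0 < rho) (rho_rg : rho < rg) (rho_dl : 4 * rho <= dl).

Local Notation D := (exterior_domain (polygon_interior N P) omega).
Local Notation Om := (exterior_angle N P j).
Local Notation e := (bisector (prev_edge N P j) (next_edge N P j)).

Lemma obstacle_far_from_corner y : dist2 y (P j) < dl / 3 -> ~ closure omega y.
Proof.
  intros Hy Hc. pose proof (dist2_pos y (P j)).
  destruct (Hc (dl / 3) ltac:(lra)) as [q [Hq Hyq]].
  destruct (corner_in_closure N P j rg convex j_lt rg_pos rg_corner (dl / 3) ltac:(lra))
    as [x [Hx Hpx]].
  pose proof (obstacle_far x q Hx Hq).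
  pose proof (dist2_triang x (P j) q). pose proof (dist2_triang (P j) y q).
  rewrite dist2_sym in Hpx, Hy. lra.
Qed.

Lemma corner_notin_D : ~ D (P j).
Proof. intros [HD _]. apply HD, (corner_in_closure N P j rg); auto. Qed.

Lemma corner_sector_in_D s p : 0 < s <= rho -> Rabs p < Om / 2 -> D (polar_pt (P j) e s p).
Proof.
  intros Hs Hp. destruct (corner_frame N P j convex j_lt) as [He HOm]. split.
  - rewrite (closure_polygon_polar N P j rg); auto; [lra|lra|].
    unfold Rabs in Hp; destruct Rcase_abs; lra.
  - apply obstacle_far_from_corner. rewrite dist2_polar_pt by (auto; lra). lra.
Qed.

Lemma corner_D_polar y : D y -> dist2 y (P j) < rho ->
  exists p, Rabs p < Om / 2 /\ y = polar_pt (P j) e (dist2 y (P j)) p.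
Proof.
  intros Hy Hyd. destruct (corner_frame N P j convex j_lt) as [He HOm].
  destruct (polar_pt_surj (P j) e He y) as [p [Hp Ey]].
  exists p. split; [|exact Ey].
  assert (Hpos : 0 < dist2 y (P j)).
  { destruct (Rle_lt_or_eq_dec 0 _ (dist2_pos y (P j))) as [Hl|Hl]; auto.
    exfalso. apply corner_notin_D. rewrite <- (dist2_eq0 y (P j) (eq_sym Hl)). auto. }
  apply Rnot_le_lt. intros Hge. destruct Hy as [Hy _]. apply Hy. rewrite Ey.
  apply (closure_polygon_polar N P j rg); auto; lra.
Qed.

Lemma corner_sides_on_boundary s : 0 <= s <= rho ->
  boundary D (polar_pt (P j) e s (Om / 2)) /\ boundary D (polar_pt (P j) e s (- (Om / 2))).
Proof.
  intros Hs. destruct (corner_frame N P j convex j_lt) as [He HOm]. pose proof PI_RGT_0.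
  assert (Hside : forall p, Rabs p = Om / 2 -> boundary D (polar_pt (P j) e s p)).
  { intros p Hp. split.
    - apply (sector_closure (P j) e Om rho D); auto; [|lra].
      intros s' p' Hs' Hp'. apply corner_sector_in_D; auto.
    - apply closure_self. intros [HD _]. apply HD.
      destruct (Req_dec s 0) as [->|Hs0];
        [rewrite polar_pt_0; apply (corner_in_closure N P j rg); auto|].
      apply (closure_polygon_polar N P j rg); auto; [lra| |lra].
      unfold Rabs in Hp; destruct Rcase_abs; lra. }
  split; apply Hside; [|rewrite Rabs_Ropp]; apply Rabs_pos_eq; lra.
Qed.

End CornerDomain.

(** * From the complex solution to real barriers *)

Definition helmholtz_data (D : pset) k M (f : pt -> R) :=
  (forall p, closure D p -> forall eps, 0 < eps -> exists dl, 0 < dl /\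
      forall q, closure D q -> dist2 p q < dl -> Rabs (f q - f p) < eps) /\
  (forall p, closure D p -> Rabs (f p) <= M) /\
  (forall p, D p -> ex_dx f p /\ ex_dy f p /\ ex_dx (dx f) p /\ ex_dy (dy f) p) /\
  (forall p, D p -> dx (dx f) p + dy (dy f) p + k ^ 2 * f p = 0) /\
  (forall p, boundary D p -> f p = 0).

Lemma dx_opp f q : dx (fun p => - f p) q = - dx f q.
Proof. apply Derive_opp. Qed.

Lemma dy_opp f q : dy (fun p => - f p) q = - dy f q.
Proof. apply Derive_opp. Qed.

Lemma helmholtz_data_opp D k M f : helmholtz_data D k M f -> helmholtz_data D k M (fun p => - f p).
Proof.
  intros [Hc [HM [HC2 [Hh Hb]]]]. split; [|split; [|split; [|split]]].
  - intros p Hp eps He. destruct (Hc p Hp eps He) as [d [Hd H]]. exists d; split; auto.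
    intros q Hq Hpq. replace (- f q - - f p) with (- (f q - f p)) by ring. rewrite Rabs_Ropp. auto.
  - intros p Hp. rewrite Rabs_Ropp. auto.
  - intros p Hp. destruct (HC2 p Hp) as [C1 [C2 [C3 C4]]].
    split; [|split; [|split]].
    + apply (ex_derive_opp (K := R_AbsRing) (V := R_NormedModule)), C1.
    + apply (ex_derive_opp (K := R_AbsRing) (V := R_NormedModule)), C2.
    + eapply ex_derive_ext; [intros t; symmetry; apply dx_opp|].
      apply (ex_derive_opp (K := R_AbsRing) (V := R_NormedModule)), C3.
    + eapply ex_derive_ext; [intros t; symmetry; apply dy_opp|].
      apply (ex_derive_opp (K := R_AbsRing) (V := R_NormedModule)), C4.
  - intros p Hp.
    assert (Ex : dx (dx (fun q => - f q)) p = - dx (dx f) p).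
    { unfold dx at 1. rewrite (Derive_ext _ (fun t => - dx f (t, snd p))) by (intros; apply dx_opp).
      apply Derive_opp. }
    assert (Ey : dy (dy (fun q => - f q)) p = - dy (dy f) p).
    { unfold dy at 1. rewrite (Derive_ext _ (fun t => - dy f (fst p, t))) by (intros; apply dy_opp).
      apply Derive_opp. }
    rewrite Ex, Ey. specialize (Hh p Hp). lra.
  - intros p Hp. rewrite Hb; auto. ring.
Qed.

Lemma Cmod_fst z : Rabs (fst z) <= Cmod z.
Proof. apply Rabs_le_polar_rad. Qed.

Lemma Cmod_snd z : Rabs (snd z) <= Cmod z.
Proof. unfold Cmod. rewrite Rplus_comm. apply Rabs_le_polar_rad. Qed.

Lemma helmholtz_data_re_im D k M (u : pt -> C) :
  C2_on_C D u -> continuous_on_C (closure D) u -> (forall p, D p -> helmholtz_at k u p) ->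
  (forall p, boundary D p -> u p = RtoC 0) -> (forall p, closure D p -> Cmod (u p) <= M) ->
  helmholtz_data D k M (Re_f u) /\ helmholtz_data D k M (Im_f u).
Proof.
  intros [HR HI] Hc Hh Hb HM.
  split; split; [| split; [|split; [|split]] | | split; [|split; [|split]]].
  - intros p Hp eps He. destruct (Hc p Hp eps He) as [d [Hd H]]. exists d; split; auto.
    intros q Hq Hpq. eapply Rle_lt_trans; [apply (Cmod_fst (Cminus (u q) (u p)))|]. auto.
  - intros p Hp. eapply Rle_trans; [apply Cmod_fst|]. auto.
  - intros p Hp. destruct (HR p Hp) as [A1 [A2 [A3 [A4 [A5 [A6 _]]]]]]. auto.
  - intros p Hp. apply (Hh p Hp).
  - intros p Hp. unfold Re_f. rewrite Hb; auto.
  - intros p Hp eps He. destruct (Hc p Hp eps He) as [d [Hd H]]. exists d; split; auto.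
    intros q Hq Hpq. eapply Rle_lt_trans; [apply (Cmod_snd (Cminus (u q) (u p)))|]. auto.
  - intros p Hp. eapply Rle_trans; [apply Cmod_snd|]. auto.
  - intros p Hp. destruct (HI p Hp) as [A1 [A2 [A3 [A4 [A5 [A6 _]]]]]]. auto.
  - intros p Hp. apply (Hh p Hp).
  - intros p Hp. unfold Im_f. rewrite Hb; auto.
Qed.

Section CornerEstimate.

Variables (N : nat) (P : nat -> pt) (omega : pset) (j : nat) (rg dl rho k M : R).
Hypotheses (convex : convex_polygon N P) (j_lt : (j < N)%nat).
Hypotheses (rg_pos : 0 < rg) (rg_corner : corner_radius N P rg).
Hypothesis obstacle_far : forall x z, polygon_interior N P x -> omega z -> dl <= dist2 x z.
Hypotheses (rho_pos : 0 < rho) (rho_rg : rho < rg) (rho_dl : 4 * rho <= dl).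
Hypotheses (k_pos : 0 < k) (k_rho : k * rho <= 1) (M_nonneg : 0 <= M).

Local Notation D := (exterior_domain (polygon_interior N P) omega).

Lemma corner_real_bound f : helmholtz_data D k M f ->
  forall y, D y -> dist2 y (P j) < rho ->
  f y <= 6 * M * Rpower (dist2 y (P j) / rho) (PI / exterior_angle N P j).
Proof.
  intros [Hc [HM [HC2 [Hh Hb]]]] y Hy Hyd.
  destruct (corner_frame N P j convex j_lt) as [He HOm].
  apply (sector_bound (P j) (bisector (prev_edge N P j) (next_edge N P j)) (exterior_angle N P j)
    rho k M D f); auto.
  - apply exterior_domain_open.
  - intros s p Hs Hp. apply (corner_sector_in_D N P omega j rg dl rho); auto.
  - intros z Hz Hzd. apply (corner_D_polar N P omega j rg rho); auto.
  - apply (corner_notin_D N P omega j rg); auto.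
  - intros s Hs. destruct (corner_sides_on_boundary N P omega j rg dl rho) with s as [B1 B2];
      auto.
  - intros p Hp. specialize (HM p Hp). unfold Rabs in HM; destruct Rcase_abs; lra.
Qed.

Lemma corner_abs_bound f : helmholtz_data D k M f ->
  forall y, D y -> dist2 y (P j) < rho ->
  Rabs (f y) <= 6 * M * Rpower (dist2 y (P j) / rho) (PI / exterior_angle N P j).
Proof.
  intros Hf y Hy Hyd.
  pose proof (corner_real_bound f Hf y Hy Hyd).
  pose proof (corner_real_bound _ (helmholtz_data_opp _ _ _ _ Hf) y Hy Hyd).
  unfold Rabs; destruct Rcase_abs; lra.
Qed.

Lemma corner_Cmod_bound (u : pt -> C) :
  C2_on_C D u -> continuous_on_C (closure D) u -> (forall p, D p -> helmholtz_at k u p) ->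
  (forall p, boundary D p -> u p = RtoC 0) -> (forall p, closure D p -> Cmod (u p) <= M) ->
  forall y, D y -> dist2 y (P j) < rho ->
  Cmod (u y) <= 12 * M * Rpower (dist2 y (P j) / rho) (PI / exterior_angle N P j).
Proof.
  intros HC2 Hc Hh Hb HM y Hy Hyd.
  destruct (helmholtz_data_re_im D k M u HC2 Hc Hh Hb HM) as [HR HI].
  pose proof (corner_abs_bound _ HR y Hy Hyd). pose proof (corner_abs_bound _ HI y Hy Hyd).
  pose proof (sqrt_sum_sq_le (fst (u y)) (snd (u y))). unfold Cmod, Re_f, Im_f in *. lra.
Qed.

End CornerEstimate.

Lemma corner_exponent_bounds N P j : convex_polygon N P -> (j < N)%nat ->
  0 < PI / exterior_angle N P j <= 1.
Proof.
  intros HP Hj. destruct (corner_frame N P j HP Hj) as [_ HOm]. pose proof PI_RGT_0.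
  split; [apply Rdiv_lt_0_compat; lra|].
  apply (Rmult_le_reg_r (exterior_angle N P j)); [lra|]. field_simplify; lra.
Qed.

Lemma Rpower_ge_self y a : 0 < y <= 1 -> 0 < a <= 1 -> y <= Rpower y a.
Proof.
  intros Hy Ha. unfold Rpower. rewrite <- (exp_ln y) at 1 by lra.
  assert (ln y <= 0) by (rewrite <- ln_1; apply ln_le; lra).
  assert (Hln : ln y <= a * ln y) by nra.
  destruct (Rle_lt_or_eq_dec _ _ Hln) as [Hl|Hq];
    [left; apply exp_increasing; auto|right; f_equal; exact Hq].
Qed.

Lemma near_ratio_bound K0 k r rho al : 0 < K0 -> 0 < k -> 0 < r -> 0 < rho ->
  1 / K0 <= k * rho <= 1 -> 0 < al <= 1 -> Rpower (r / rho) al <= K0 * Rpower (k * r) al.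
Proof.
  intros HK Hk Hr Hrho Hkrho Hal.
  replace (r / rho) with ((k * r) / (k * rho)) by (field; lra).
  rewrite Rpower_div by (apply Rmult_lt_0_compat; lra).
  assert (Hge : k * rho <= Rpower (k * rho) al)
    by (apply Rpower_ge_self; [split; [apply Rmult_lt_0_compat|]|]; lra).
  pose proof (Rpower_pos (k * rho) al). pose proof (Rpower_pos (k * r) al).
  unfold Rdiv. apply (Rmult_le_reg_r (Rpower (k * rho) al)); auto.
  rewrite Rmult_assoc, Rinv_l, Rmult_1_r by lra.
  assert (1 <= K0 * Rpower (k * rho) al).
  { apply Rle_trans with (K0 * (1 / K0)); [right; field; lra|]. apply Rmult_le_compat_l; lra. }
  nra.
Qed.

Lemma far_ratio_bound K0 k r al : 0 < K0 -> 1 / K0 <= k * r <= 1 -> 0 < al <= 1 ->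
  1 <= K0 * Rpower (k * r) al.
Proof.
  intros HK Hkr Hal. assert (0 < 1 / K0) by (apply Rdiv_lt_0_compat; lra).
  assert (k * r <= Rpower (k * r) al) by (apply Rpower_ge_self; lra).
  apply Rle_trans with (K0 * (1 / K0)); [right; field; lra|]. apply Rmult_le_compat_l; lra.
Qed.

(* The side-length condition [k L >= c_*] keeps [k rho] away from [0] when [rho = min (1/k) rg]. *)
Lemma scaled_radius_bounds cstar k L rg : 0 < cstar -> 0 < k -> 0 < rg -> cstar <= k * L ->
  1 / Rmax 1 (L / (cstar * rg)) <= k * Rmin (1 / k) rg <= 1.
Proof.
  intros Hc Hk Hrg HL. set (K0 := Rmax 1 (L / (cstar * rg))).
  assert (HK0 : 1 <= K0) by apply Rmax_l.
  assert (HK1 : L / (cstar * rg) <= K0) by apply Rmax_r.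
  split.
  - apply (Rmult_le_reg_r K0); [lra|]. replace (1 / K0 * K0) with 1 by (field; lra).
    unfold Rmin. destruct Rle_dec.
    + replace (k * (1 / k)) with 1 by (field; lra). lra.
    + apply Rle_trans with (k * rg * (L / (cstar * rg))).
      * replace (k * rg * (L / (cstar * rg))) with ((k * L) / cstar) by (field; lra).
        apply (Rmult_le_reg_r cstar); [lra|].
        replace (k * L / cstar * cstar) with (k * L) by (field; lra). lra.
      * apply Rmult_le_compat_l; auto. apply Rmult_le_pos; lra.
  - apply Rle_trans with (k * (1 / k)); [apply Rmult_le_compat_l; [lra|apply Rmin_l]|].
    right; field; lra.
Qed.

Lemma Cmod_le_on_closure (D : pset) (u : pt -> C) M : continuous_on_C (closure D) u ->
  (forall y, D y -> Cmod (u y) <= M) -> forall p, closure D p -> Cmod (u p) <= M.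
Proof.
  intros Hcont HM p Hp. apply Rnot_lt_le. intro Hlt.
  destruct (Hcont p Hp (Cmod (u p) - M) ltac:(lra)) as [dd [Hdd Hq]].
  destruct (Hp dd Hdd) as [q [Hq1 Hq2]].
  specialize (Hq q (closure_self D q Hq1) Hq2). pose proof (HM q Hq1).
  assert (Cmod (u p) <= Cmod (u q) + Cmod (Cminus (u q) (u p))).
  { replace (u p) with (Cplus (u q) (Copp (Cminus (u q) (u p)))) at 1.
    - eapply Rle_trans; [apply Cmod_triangle|]. rewrite Cmod_opp. lra.
    - unfold Cminus, Cplus, Copp. destruct (u p), (u q). simpl. f_equal; ring. }
  lra.
Qed.

Lemma sup_norm_on_le_scaled (D : pset) (u : pt -> C) x a c : D x -> 0 < c ->
  (forall M, 0 <= M -> (forall y, D y -> Cmod (u y) <= M) -> a <= c * M) ->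
  Rbar_le (Finite a) (Rbar_mult (Finite c) (sup_norm_on D u)).
Proof.
  intros Hx Hc Hbound.
  assert (Hub : forall y, D y -> Rbar_le (Finite (Cmod (u y))) (sup_norm_on D u))
    by (intros y Hy; apply (proj1 (Lub_Rbar_correct _)); exists y; auto).
  pose proof (Hub x Hx) as Hux.
  destruct (sup_norm_on D u) as [M| |]; simpl in Hux |- *.
  - apply Hbound; [apply Rle_trans with (Cmod (u x)); [apply Cmod_ge_0|exact Hux]|].
    intros y Hy. exact (Hub y Hy).
  - destruct (Rle_dec 0 c); [|lra]. destruct (Rle_lt_or_eq_dec 0 c r); [exact I|lra].
  - contradiction.
Qed.

Theorem lemma3p6 :
  forall (N : nat) (P : nat -> pt) (omega : pset) (cstar : R),
    convex_polygon N P ->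
    admissible_obstacle omega ->
    (forall x, omega x -> ~ closure (polygon_interior N P) x) ->
    dist_sets_pos (polygon_interior N P) omega ->
    0 < cstar ->
  exists Cc : R, 0 < Cc /\
  forall (k : R) (d : pt) (u : pt -> C) (j : nat) (x : pt),
    let Omega := polygon_interior N P in
    let D := exterior_domain Omega omega in
    0 < k ->
    (forall i, (i < N)%nat -> cstar <= k * side_length N P i) ->
    norm2 d = 1 ->
    C2_on_C D u ->
    continuous_on_C (closure D) u ->
    (forall p, D p -> helmholtz_at k u p) ->
    (forall p, boundary D p -> u p = RtoC 0) ->
    sommerfeld k (fun y => Cminus (u y) (plane_wave k d y)) ->
    (j < N)%nat ->
    D x ->
    0 < dist2 x (P j) <= 1 / k ->
    lt_dist_pt_set (dist2 x (P j)) (P j) (boundary omega) ->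
    Rbar_le (Finite (Cmod (u x)))
      (Rbar_mult (Finite (Cc * Rpower (k * dist2 x (P j)) (PI / exterior_angle N P j)))
                 (sup_norm_on D u)).
Proof.
  intros N P omega cstar HP _ _ [dl [Hdl Hsep]] Hc.
  destruct (corner_radius_exists N P HP) as [rg [Hrg Hcorner]].
  set (rgeo := Rmin (rg / 2) (dl / 4)).
  assert (Hrgeo : 0 < rgeo /\ rgeo <= rg / 2 /\ rgeo <= dl / 4)
    by (split; [apply Rmin_pos; lra|split; [apply Rmin_l|apply Rmin_r]]).
  set (K0 := Rmax 1 (side_length N P 0 / (cstar * rgeo))).
  assert (HK0 : 1 <= K0) by apply Rmax_l.
  exists (12 * K0). split; [lra|].
  intros k d u j x Omega D Hk HL _ HC2 Hcont Hhelm Hbd _ Hj HxD Hr _.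
  pose proof (corner_exponent_bounds N P j HP Hj) as Hal.
  pose proof (scaled_radius_bounds cstar k _ rgeo Hc Hk (proj1 Hrgeo)
    (HL 0%nat ltac:(destruct HP; lia))) as Hkrho.
  set (rho := Rmin (1 / k) rgeo) in Hkrho. fold K0 in Hkrho.
  assert (Hrho : 0 < rho <= rgeo)
    by (split; [apply Rmin_pos; [apply Rdiv_lt_0_compat|]|apply Rmin_r]; lra).
  apply (sup_norm_on_le_scaled D u x); auto; [apply Rmult_lt_0_compat; [lra|apply Rpower_pos]|].
  intros M HM0 HM. pose proof (Cmod_le_on_closure D u M Hcont HM) as HMcl.
  destruct (Rlt_or_le (dist2 x (P j)) rho) as [Hnear|Hbeyond].
  - pose proof (corner_Cmod_bound N P omega j rg dl rho k M HP Hj Hrg Hcorner Hsep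
      ltac:(lra) ltac:(lra) ltac:(lra) Hk ltac:(lra) HM0 u HC2 Hcont Hhelm Hbd HMcl x HxD Hnear).
    pose proof (near_ratio_bound K0 k (dist2 x (P j)) rho _ ltac:(lra) Hk ltac:(lra) ltac:(lra)
      Hkrho Hal).
    nra.
  - assert (Hkr : 1 / K0 <= k * dist2 x (P j) <= 1).
    { split; [apply Rle_trans with (k * rho); [lra|apply Rmult_le_compat_l; lra]|].
      replace 1 with (k * (1 / k)) by (field; lra). apply Rmult_le_compat_l; lra. }
    pose proof (far_ratio_bound K0 k _ _ ltac:(lra) Hkr Hal). pose proof (HM x HxD). nra.
Qed.
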